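(* Let $\textnormal{R}\in\{\textnormal{ML},\textnormal{wML},\textnormal{C},\textnormal{S},\textnormal{CH},\textnormal{wCH}\}$ and let $\omega\in\Omega$ be a path that is $\textnormal{R}$-random for a computable forecasting system $\varphi$. Then $I_\textnormal{R}(\omega)\subseteq I_\varphi(\omega)$, where $I_\varphi(\omega)=\big[\liminf_{n\to\infty}\underline{\varphi}(\omega_{1:n}),\ \limsup_{n\to\infty}\overline{\varphi}(\omega_{1:n})\big]$.
   Context: $\mathcal{X}=\{0,1\}$; $\Omega=\mathcal{X}^{\mathbb{N}}$ (paths); $\mathbb{S}=\bigcup_{n\geq0}\mathcal{X}^n$ (situations), $\square$ empty string, $|s|$ length, $\omega_{1:n}=(\omega_1,\dots,\omega_n)$, $\omega_{1:0}=\square$. $\mathcal{I}$: nonempty closed intervals $I\subseteq[0,1]$. A forecasting system is a map $\varphi:\mathbb{S}\to\mathcal{I}$, $\underline{\varphi}=\min\varphi$, $\overline{\varphi}=\max\varphi$; an interval forecast $I$ is identified with the constant forecasting system $s\mapsto I$. A real map $r$ on a countable effectively encoded set $\mathcal D$ is computable if there is a recursive $q:\mathcal{D}\times\mathbb{N}_0\to\mathbb{Q}$ with $|r(d)-q(d,n)|<2^{-n}$; lower semicomputable if there is a recursive $q$ with $q(d,n+1)\ge q(d,n)$ and $r(d)=\lim_nq(d,n)$. $\varphi$ computable if $\underline\varphi,\overline\varphi$ are. $\overline{E}_I(f)=\max_{p\in I}[pf(1)+(1-p)f(0)]$. A real process $F:\mathbb S\to\mathbb R$ is a supermartingale for $\varphi$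 if $\overline{E}_{\varphi(s)}(F(s\,\cdot)-F(s))\le0$ for all $s$; a test supermartingale if also $F\ge0$, $F(\square)=1$. A multiplier process $D$ maps situations to gambles $\mathcal X\to\mathbb R$, generating $D^{\circledcirc}(x_1,\dots,x_n)=\prod_{k=0}^{n-1}D(x_{1:k})(x_{k+1})$; lower semicomputable if $(s,x)\mapsto D(s)(x)$ is. For path $\omega$ and forecasting system $\varphi$: ML-random if no lower semicomputable test supermartingale $T$ for $\varphi$ has $\limsup_nT(\omega_{1:n})=\infty$; wML-random if no test supermartingale for $\varphi$ of the form $D^{\circledcirc}$, $D$ lower semicomputable, has this; C-random if no computable test supermartingale for $\varphi$ has this; S-random if there is no computable test supermartingale $T$ for $\varphi$ and computable non-decreasing unbounded $\tau:\mathbb N_0\to\mathbb R_{\ge0}$ with $\limsup_n[T(\omega_{1:n})-\tau(n)]\ge0$; CH-random (resp. wCH-random) if for every recursive (resp. recursive and temporal, i.e. depending only on $|s|$) $S:\mathbb S\to\{0,1\}$ with $\sum_{k=0}^{n-1}S(\omega_{1:k})\to\infty$: $\liminf_n \frac{\sum_{k<n}S(\omega_{1:k})[\omega_{k+1}-\underline\varphi(\omega_{1:k})]}{\sum_{k<n}S(\omega_{1:k})}\ge0$ and $\limsup_n \frac{\sum_{k<n}S(\omega_{1:k})[\omega_{k+1}-\overline\varphi(\omega_{1:k})]}{\sum_{k<n}S(\omega_{1:k})}\le0$. $\mathcal I_\textnormal{R}(\omega)=\{I\in\mathcal I:\omega\text{ R-random for }I\}$, $I_\textnormal{R}(\omega)=\bigcap_{I\in\mathcal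 I_\textnormal{R}(\omega)}I$. *)

From Stdlib Require Import Reals Lra Lia List QArith Qreals.
From Coquelicot Require Import Coquelicot.
Import ListNotations.
Open Scope R_scope.

(* A model of computation: partial recursive functions nat -> nat,          *)
(* via Cantor pairing).  [ev c x y] : program c on input x halts with y.    *)

Definition cpair (a b : nat) : nat := ((a + b) * (a + b + 1)) / 2 + b.

Inductive code : Type :=
| cZero | cSucc | cId | cFst | cSnd
| cPair (f g : code)
| cComp (f g : code)
| cRec (f g : code)
| cMu (f : code).

Inductive ev : code -> nat -> nat -> Prop :=
| ev_zero x : ev cZero x 0
| ev_succ x : ev cSucc x (S x)
| ev_id x : ev cId x x
| ev_fst a b : ev cFst (cpair a b) a
| ev_snd a b : ev cSnd (cpair a b) b
| ev_pair f g x a b : ev f x a -> ev g x b -> ev (cPair f g) x (cpair a b)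
| ev_comp f g x y z : ev g x y -> ev f y z -> ev (cComp f g) x z
| ev_rec0 f g y z : ev f y z -> ev (cRec f g) (cpair 0 y) z
| ev_recS f g n y z w : ev (cRec f g) (cpair n y) z ->
    ev g (cpair n (cpair z y)) w -> ev (cRec f g) (cpair (S n) y) w
| ev_mu f y n : ev f (cpair n y) 0 ->
    (forall m, (m < n)%nat -> exists k, ev f (cpair m y) (S k)) ->
    ev (cMu f) y n.

Definition enc_bool (b : bool) : nat := if b then 1%nat else 0%nat.

(* situations: finite binary strings; x1 is the head of the list *)
Fixpoint enc_sit (s : list bool) : nat :=
  match s with
  | [] => 0%nat
  | b :: s' => S (cpair (enc_bool b) (enc_sit s'))
  end.

Definition enc_sitx (p : list bool * bool) : nat :=
  cpair (enc_sit (fst p)) (enc_bool (snd p)).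

Definition enc_Z (z : Z) : nat :=
  match z with
  | Z0 => 0%nat
  | Zpos p => (2 * Pos.to_nat p)%nat
  | Zneg p => (2 * Pos.to_nat p - 1)%nat
  end.

Definition enc_Q (q : Q) : nat :=
  cpair (enc_Z (Qnum q)) (Pos.to_nat (Qden q) - 1).

Definition computable_map {D : Type} (e : D -> nat) (r : D -> R) : Prop :=
  exists c : code, forall (d : D) (n : nat),
    exists q : Q, ev c (cpair (e d) n) (enc_Q q) /\
                  Rabs (r d - Q2R q) < (/ 2) ^ n.

Definition lower_semicomputable_map {D : Type} (e : D -> nat) (r : D -> R)
  : Prop :=
  exists (c : code) (q : D -> nat -> Q),
    (forall d n, ev c (cpair (e d) n) (enc_Q (q d n))) /\
    (forall d n, Q2R (q d n) <= Q2R (q d (S n))) /\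
    (forall d, is_lim_seq (fun n => Q2R (q d n)) (r d)).

Definition recursive_selection (Sel : list bool -> bool) : Prop :=
  exists c : code, forall s, ev c (enc_sit s) (enc_bool (Sel s)).

Record interval := mkInterval {
  ilo : R; ihi : R;
  interval_ok : 0 <= ilo /\ ilo <= ihi /\ ihi <= 1 }.

Record forecasting_system := mkFS {
  flo : list bool -> R; fhi : list bool -> R;
  fs_ok : forall s, 0 <= flo s /\ flo s <= fhi s /\ fhi s <= 1 }.

Definition const_fs (I : interval) : forecasting_system :=
  mkFS (fun _ => ilo I) (fun _ => ihi I) (fun _ => interval_ok I).

Definition computable_fs (phi : forecasting_system) : Prop :=
  computable_map enc_sit (flo phi) /\ computable_map enc_sit (fhi phi).

(* paths omega : nat -> bool, omega k = omega_{k+1}; prefix omega n = omega_{1:n} *)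
Definition prefix (omega : nat -> bool) (n : nat) : list bool :=
  map omega (seq 0 n).

(* upper expectation of a gamble f : X -> R w.r.t. an interval [a,b]:
   overline{E}(f) = max_{p in [a,b]} (p f(1) + (1-p) f(0)).
   The condition overline{E}(f) <= 0 means every such value is <= 0. *)
Definition upper_exp_nonpos (a b : R) (f : bool -> R) : Prop :=
  forall p, a <= p <= b -> p * f true + (1 - p) * f false <= 0.

Definition supermartingale (phi : forecasting_system) (F : list bool -> R)
  : Prop :=
  forall s, upper_exp_nonpos (flo phi s) (fhi phi s)
              (fun x => F (s ++ [x]) - F s).

Definition test_supermartingale (phi : forecasting_system) (F : list bool -> R)
  : Prop :=
  supermartingale phi F /\ (forall s, 0 <= F s) /\ F [] = 1.

(* D^{circledcirc}(x_1..x_n) = prod_{k<n} D(x_{1:k})(x_{k+1}) *)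
Fixpoint mult_aux (D : list bool -> bool -> R) (h s : list bool) : R :=
  match s with
  | [] => 1
  | x :: s' => D h x * mult_aux D (h ++ [x]) s'
  end.
Definition mult_process (D : list bool -> bool -> R) (s : list bool) : R :=
  mult_aux D [] s.

Definition unbounded_on (T : list bool -> R) (omega : nat -> bool) : Prop :=
  LimSup_seq (fun n => T (prefix omega n)) = p_infty.

Fixpoint rsum (n : nat) (f : nat -> R) : R :=
  match n with
  | O => 0
  | S m => rsum m f + f m
  end.

Inductive rnotion := ML | wML | C | Sch | CH | wCH.

Definition ML_random (phi : forecasting_system) (omega : nat -> bool) : Prop :=
  ~ exists T, test_supermartingale phi T /\
              lower_semicomputable_map enc_sit T /\ unbounded_on T omega.

Definition wML_random (phi : forecasting_system) (omega : nat -> bool) : Prop :=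
  ~ exists D : list bool -> bool -> R,
      lower_semicomputable_map enc_sitx (fun p => D (fst p) (snd p)) /\
      test_supermartingale phi (mult_process D) /\
      unbounded_on (mult_process D) omega.

Definition C_random (phi : forecasting_system) (omega : nat -> bool) : Prop :=
  ~ exists T, test_supermartingale phi T /\
              computable_map enc_sit T /\ unbounded_on T omega.

Definition S_random (phi : forecasting_system) (omega : nat -> bool) : Prop :=
  ~ exists (T : list bool -> R) (tau : nat -> R),
      test_supermartingale phi T /\ computable_map enc_sit T /\
      computable_map (fun n : nat => n) tau /\
      (forall n, 0 <= tau n) /\ (forall n, tau n <= tau (S n)) /\
      is_lim_seq tau p_infty /\
      Rbar_le (Finite 0)
        (LimSup_seq (fun n => T (prefix omega n) - tau n)).

Definition sel_count (Sel : list bool -> bool) (omega : nat -> bool) (n : nat)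
  : R := rsum n (fun k => if Sel (prefix omega k) then 1 else 0).

Definition CH_condition (phi : forecasting_system) (omega : nat -> bool)
  (Sel : list bool -> bool) : Prop :=
  is_lim_seq (sel_count Sel omega) p_infty ->
  Rbar_le (Finite 0)
    (LimInf_seq (fun n =>
       rsum n (fun k => (if Sel (prefix omega k) then 1 else 0) *
              ((if omega k then 1 else 0) - flo phi (prefix omega k)))
       / sel_count Sel omega n)) /\
  Rbar_le
    (LimSup_seq (fun n =>
       rsum n (fun k => (if Sel (prefix omega k) then 1 else 0) *
              ((if omega k then 1 else 0) - fhi phi (prefix omega k)))
       / sel_count Sel omega n)) (Finite 0).

Definition CH_random (phi : forecasting_system) (omega : nat -> bool) : Prop :=
  forall Sel, recursive_selection Sel -> CH_condition phi omega Sel.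

Definition temporal (Sel : list bool -> bool) : Prop :=
  forall s t, length s = length t -> Sel s = Sel t.

Definition wCH_random (phi : forecasting_system) (omega : nat -> bool) : Prop :=
  forall Sel, recursive_selection Sel -> temporal Sel ->
    CH_condition phi omega Sel.

Definition random (Rn : rnotion) : forecasting_system -> (nat -> bool) -> Prop :=
  match Rn with
  | ML => ML_random
  | wML => wML_random
  | C => C_random
  | Sch => S_random
  | CH => CH_random
  | wCH => wCH_random
  end.

(* x belongs to I_R(omega) = intersection of all I with omega R-random for I *)
Definition in_I_R (Rn : rnotion) (omega : nat -> bool) (x : R) : Prop :=
  forall I : interval, random Rn (const_fs I) omega -> ilo I <= x <= ihi I.

Definition in_I_phi (phi : forecasting_system) (omega : nat -> bool) (x : R)
  : Prop :=
  Rbar_le (LimInf_seq (fun n => flo phi (prefix omega n))) (Finite x) /\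
  Rbar_le (Finite x) (LimSup_seq (fun n => fhi phi (prefix omega n))).

(* Suppose x < liminf flo(omega_{1:n}); the limsup side is symmetric, and x lies in
   [0,1] because omega is R-random for [0,1].  Pick a rational b and a precision M with
   x < b - 2^-M and flo(omega_{1:n}) > b + 2^-M eventually.  As phi is computable,
   "the 2^-M-approximation of flo(s) exceeds b" is a decidable property safe(s); it holds
   along omega from some N on and forces phi(s) to lie inside I := [b - 2^-M, 1].
   A test supermartingale T for I becomes one for phi: stay at 1 until the situation
   extends w0 := omega_{1:N+1}, then follow c T and freeze at the first unsafe
   situation (for wML the multipliers themselves are frozen).  The supermartingale
   inequality is only needed where phi(s) lies inside I, the decidability of safe
   preserves (lower semi)computability, and along omega the new process is eventually
   c T.  So omega is R-random for I (for CH and wCH simply because phi lies inside I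
   eventually along omega), hence x >= b - 2^-M > x. *)

From Stdlib Require Import Reals Lra Lia List QArith Qreals ZArith IndefiniteDescription.
From Coquelicot Require Import Coquelicot.
Import ListNotations.

Open Scope nat_scope.

(** * Cantor pairing and total recursive functions *)

Definition triangle (n : nat) : nat := n * (n + 1) / 2.

Lemma triangle_S n : triangle (S n) = triangle n + S n.
Proof.
  unfold triangle.
  replace (S n * (S n + 1)) with (n * (n + 1) + S n * 2) by lia.
  rewrite Nat.div_add by lia. lia.
Qed.

Lemma triangle_le_mono n m : n <= m -> triangle n <= triangle m.
Proof. induction 1; auto. rewrite triangle_S; lia. Qed.

Lemma cpair_triangle a b : cpair a b = triangle (a + b) + b.
Proof. reflexivity. Qed.

Lemma cpair_inj a b a' b' : cpair a b = cpair a' b' -> a = a' /\ b = b'.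
Proof.
  rewrite !cpair_triangle. intros H.
  destruct (lt_eq_lt_dec (a + b) (a' + b')) as [[Hlt|Heq]|Hlt].
  - pose proof (triangle_le_mono (S (a + b)) (a' + b') Hlt).
    rewrite triangle_S in *. lia.
  - rewrite Heq in H. lia.
  - pose proof (triangle_le_mono (S (a' + b')) (a + b) Hlt).
    rewrite triangle_S in *. lia.
Qed.

(* Walks the Cantor enumeration: each successor moves one step down a diagonal. *)
Fixpoint unpair (x : nat) : nat * nat :=
  match x with
  | O => (0, 0)
  | S x' => let (a, b) := unpair x' in
            match a with O => (S b, 0) | S a' => (a', S b) end
  end.

Definition unpair1 (x : nat) : nat := fst (unpair x).
Definition unpair2 (x : nat) : nat := snd (unpair x).
Arguments unpair1 : simpl never.
Arguments unpair2 : simpl never.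

Lemma cpair_unpair x : cpair (unpair1 x) (unpair2 x) = x.
Proof.
  unfold unpair1, unpair2.
  induction x as [|x IH]; [reflexivity|].
  simpl. destruct (unpair x) as [a b]. simpl in *.
  rewrite !cpair_triangle in *. destruct a as [|a]; simpl.
  - rewrite Nat.add_0_l in IH. rewrite !Nat.add_0_r, triangle_S. lia.
  - replace (a + S b) with (S a + b) by lia. lia.
Qed.

Lemma unpair_cpair a b : unpair1 (cpair a b) = a /\ unpair2 (cpair a b) = b.
Proof. apply cpair_inj. apply cpair_unpair. Qed.

Lemma unpair1_cpair a b : unpair1 (cpair a b) = a.
Proof. apply unpair_cpair. Qed.

Lemma unpair2_cpair a b : unpair2 (cpair a b) = b.
Proof. apply unpair_cpair. Qed.

Lemma unpair2_le x : unpair2 x <= x.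
Proof. rewrite <- (cpair_unpair x) at 2. rewrite cpair_triangle. lia. Qed.

Definition recursive (f : nat -> nat) : Prop := exists c, forall x, ev c x (f x).

Lemma recursive_ext f g : recursive f -> (forall x, f x = g x) -> recursive g.
Proof. intros [c H] E. exists c. intros x. rewrite <- E. auto. Qed.

Lemma recursive_code_comp (c : code) (h g : nat -> nat) :
  recursive h -> (forall x, ev c (h x) (g x)) -> recursive g.
Proof. intros [ch Hh] H. exists (cComp c ch). intros x. econstructor; eauto. Qed.

Lemma recursive_comp f g : recursive f -> recursive g -> recursive (fun x => f (g x)).
Proof. intros [cf Hf] Hg. apply (recursive_code_comp cf g); auto. Qed.

Lemma recursive_id : recursive (fun x => x).
Proof. exists cId. constructor. Qed.

Lemma recursive_zero : recursive (fun _ => 0).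
Proof. exists cZero. constructor. Qed.

Lemma recursive_S f : recursive f -> recursive (fun x => S (f x)).
Proof. apply recursive_comp. exists cSucc. constructor. Qed.

Lemma recursive_const k : recursive (fun _ => k).
Proof. induction k; auto using recursive_zero, recursive_S. Qed.

Lemma recursive_unpair1 f : recursive f -> recursive (fun x => unpair1 (f x)).
Proof.
  apply recursive_comp. exists cFst. intros x.
  rewrite <- (cpair_unpair x) at 1. constructor.
Qed.

Lemma recursive_unpair2 f : recursive f -> recursive (fun x => unpair2 (f x)).
Proof.
  apply recursive_comp. exists cSnd. intros x.
  rewrite <- (cpair_unpair x) at 1. constructor.
Qed.

Lemma recursive_cpair f g :
  recursive f -> recursive g -> recursive (fun x => cpair (f x) (g x)).
Proof. intros [cf Hf] [cg Hg]. exists (cPair cf cg). constructor; auto. Qed.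

Fixpoint prim_rec (f g : nat -> nat) (n y : nat) : nat :=
  match n with
  | O => f y
  | S n' => g (cpair n' (cpair (prim_rec f g n' y) y))
  end.

Lemma recursive_prim_rec f g n y :
  recursive f -> recursive g -> recursive n -> recursive y ->
  recursive (fun x => prim_rec f g (n x) (y x)).
Proof.
  intros [cf Hf] [cg Hg] Hn Hy.
  apply (recursive_code_comp (cRec cf cg) (fun x => cpair (n x) (y x))).
  - apply recursive_cpair; auto.
  - intros x. cbv beta. generalize (n x) (y x). intros m z.
    induction m; simpl; econstructor; eauto.
Qed.

Lemma recursive_iter F n y :
  recursive F -> recursive n -> recursive y ->
  recursive (fun x => Nat.iter (n x) F (y x)).
Proof.
  intros HF Hn Hy.
  eapply recursive_ext.
  - apply (recursive_prim_rec (fun z => z) (fun z => F (unpair1 (unpair2 z))) n y);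
      auto using recursive_id, recursive_comp, recursive_unpair1, recursive_unpair2.
  - intros x. cbv beta. generalize (n x) (y x). intros m z.
    induction m; simpl; auto. rewrite unpair2_cpair, unpair1_cpair, IHm. reflexivity.
Qed.

Lemma recursive_ifz f g h :
  recursive f -> recursive g -> recursive h ->
  recursive (fun x => match f x with O => g x | S _ => h x end).
Proof.
  intros Hf Hg Hh. eapply recursive_ext.
  - apply (recursive_prim_rec unpair1 (fun z => unpair2 (unpair2 (unpair2 z))) f
             (fun x => cpair (g x) (h x)));
      auto using recursive_id, recursive_cpair, recursive_unpair1, recursive_unpair2.
  - intros x. cbv beta. destruct (f x); simpl.
    + apply unpair1_cpair.
    + rewrite !unpair2_cpair. reflexivity.
Qed.

Lemma recursive_add f g : recursive f -> recursive g -> recursive (fun x => f x + g x).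
Proof.
  intros Hf Hg. eapply recursive_ext.
  - apply (recursive_iter S f g); auto using recursive_S, recursive_id.
  - intros x. cbv beta. generalize (f x) (g x). intros m z. induction m; simpl; auto.
Qed.

Lemma recursive_mul f g : recursive f -> recursive g -> recursive (fun x => f x * g x).
Proof.
  intros Hf Hg. eapply recursive_ext.
  - apply (recursive_prim_rec (fun _ => 0)
             (fun z => unpair1 (unpair2 z) + unpair2 (unpair2 z)) f g);
      auto using recursive_const, recursive_add, recursive_unpair1, recursive_unpair2,
        recursive_id.
  - intros x. cbv beta. generalize (f x) (g x). intros m z.
    induction m; simpl; auto. rewrite unpair2_cpair, unpair1_cpair, unpair2_cpair, IHm. lia.
Qed.

Lemma recursive_pred f : recursive f -> recursive (fun x => pred (f x)).
Proof.
  intros Hf. eapply recursive_ext.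
  - apply (recursive_prim_rec (fun _ => 0) unpair1 f (fun _ => 0));
      auto using recursive_const, recursive_id, recursive_unpair1.
  - intros x. cbv beta. destruct (f x); simpl; auto using unpair1_cpair.
Qed.

Lemma recursive_sub f g : recursive f -> recursive g -> recursive (fun x => f x - g x).
Proof.
  intros Hf Hg. eapply recursive_ext.
  - apply (recursive_iter pred g f); auto using recursive_pred, recursive_id.
  - intros x. cbv beta. generalize (f x) (g x). intros z m.
    induction m; simpl; [lia|]. rewrite IHm. lia.
Qed.

Definition half_step (z : nat) : nat :=
  match unpair2 z with
  | O => cpair (unpair1 z) 1
  | S _ => cpair (S (unpair1 z)) 0
  end.

Lemma iter_half_step n : Nat.iter n half_step (cpair 0 0) = cpair (n / 2) (n mod 2).
Proof.
  induction n as [|n IH]; [reflexivity|].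
  rewrite Nat.iter_succ, IH. unfold half_step. rewrite unpair1_cpair, unpair2_cpair.
  pose proof (Nat.div_mod_eq n 2). pose proof (Nat.mod_upper_bound n 2).
  destruct (n mod 2) as [|[|r]] eqn:E; [| |lia]; f_equal.
  - apply (Nat.div_unique _ 2 (n / 2) 1); lia.
  - apply (Nat.mod_unique _ 2 (n / 2) 1); lia.
  - apply (Nat.div_unique _ 2 (S (n / 2)) 0); lia.
  - apply (Nat.mod_unique _ 2 (S (n / 2)) 0); lia.
Qed.

Lemma recursive_half_step : recursive half_step.
Proof.
  unfold half_step. apply recursive_ifz.
  - apply recursive_unpair2, recursive_id.
  - apply recursive_cpair; [apply recursive_unpair1, recursive_id | apply recursive_const].
  - apply recursive_cpair; [apply recursive_S, recursive_unpair1, recursive_id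
                           | apply recursive_const].
Qed.

Lemma recursive_div2 f : recursive f -> recursive (fun x => f x / 2).
Proof.
  intros Hf. eapply recursive_ext.
  - apply recursive_unpair1, (recursive_iter half_step f (fun _ => cpair 0 0));
      auto using recursive_half_step, recursive_const.
  - intros x. cbv beta. rewrite iter_half_step. apply unpair1_cpair.
Qed.

Lemma recursive_mod2 f : recursive f -> recursive (fun x => f x mod 2).
Proof.
  intros Hf. eapply recursive_ext.
  - apply recursive_unpair2, (recursive_iter half_step f (fun _ => cpair 0 0));
      auto using recursive_half_step, recursive_const.
  - intros x. cbv beta. rewrite iter_half_step. apply unpair2_cpair.
Qed.

Definition dec_bool (n : nat) : bool := match n with O => false | S _ => true end.

Lemma dec_bool_enc b : dec_bool (enc_bool b) = b.
Proof. destruct b; reflexivity. Qed.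

Lemma recursive_dec_bool f : recursive f -> recursive (fun x => enc_bool (dec_bool (f x))).
Proof.
  intros Hf. eapply recursive_ext.
  - apply (recursive_ifz f (fun _ => 0) (fun _ => 1)); auto using recursive_const.
  - intros x. cbv beta. destruct (f x); reflexivity.
Qed.

Lemma recursive_if (b : nat -> bool) g h :
  recursive (fun x => enc_bool (b x)) -> recursive g -> recursive h ->
  recursive (fun x => if b x then g x else h x).
Proof.
  intros Hb Hg Hh. eapply recursive_ext.
  - apply (recursive_ifz _ h g Hb); auto.
  - intros x. cbv beta. destruct (b x); reflexivity.
Qed.

Lemma recursive_leb f g :
  recursive f -> recursive g -> recursive (fun x => enc_bool (f x <=? g x)).
Proof.
  intros Hf Hg. eapply recursive_ext.
  - apply (recursive_ifz (fun x => f x - g x) (fun _ => 1) (fun _ => 0));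
      auto using recursive_sub, recursive_const.
  - intros x. cbv beta.
    destruct (f x <=? g x) eqn:E; [apply Nat.leb_le in E | apply Nat.leb_gt in E];
      destruct (f x - g x) eqn:E'; simpl; auto; lia.
Qed.

Lemma recursive_ltb f g :
  recursive f -> recursive g -> recursive (fun x => enc_bool (f x <? g x)).
Proof. intros Hf Hg. apply (recursive_leb (fun x => S (f x))); auto using recursive_S. Qed.

Lemma recursive_eqb f g :
  recursive f -> recursive g -> recursive (fun x => enc_bool (f x =? g x)).
Proof.
  intros Hf Hg. eapply recursive_ext.
  - apply (recursive_ifz (fun x => (f x - g x) + (g x - f x)) (fun _ => 1) (fun _ => 0));
      auto using recursive_add, recursive_sub, recursive_const.
  - intros x. cbv beta.
    destruct (f x =? g x) eqn:E; [apply Nat.eqb_eq in E | apply Nat.eqb_neq in E];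
      destruct (f x - g x + (g x - f x)) eqn:E'; simpl; auto; lia.
Qed.

Lemma recursive_andb (b c : nat -> bool) :
  recursive (fun x => enc_bool (b x)) -> recursive (fun x => enc_bool (c x)) ->
  recursive (fun x => enc_bool (b x && c x)).
Proof.
  intros Hb Hc. eapply recursive_ext.
  - apply (recursive_if b (fun x => enc_bool (c x)) (fun _ => 0) Hb Hc), recursive_const.
  - intros x. cbv beta. destruct (b x); reflexivity.
Qed.

Lemma recursive_negb (b : nat -> bool) :
  recursive (fun x => enc_bool (b x)) -> recursive (fun x => enc_bool (negb (b x))).
Proof.
  intros Hb. eapply recursive_ext.
  - apply (recursive_if b (fun _ => 0) (fun _ => 1) Hb); apply recursive_const.
  - intros x. cbv beta. destruct (b x); reflexivity.
Qed.

Lemma recursive_orb (b c : nat -> bool) :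
  recursive (fun x => enc_bool (b x)) -> recursive (fun x => enc_bool (c x)) ->
  recursive (fun x => enc_bool (b x || c x)).
Proof.
  intros Hb Hc. eapply recursive_ext.
  - apply (recursive_if b (fun _ => 1) (fun x => enc_bool (c x)) Hb (recursive_const 1) Hc).
  - intros x. cbv beta. destruct (b x); reflexivity.
Qed.

Lemma recursive_binary (G : nat -> nat -> nat) f g :
  recursive (fun z => G (unpair1 z) (unpair2 z)) -> recursive f -> recursive g ->
  recursive (fun x => G (f x) (g x)).
Proof.
  intros HG Hf Hg. eapply recursive_ext.
  - apply (recursive_comp _ _ HG (recursive_cpair f g Hf Hg)).
  - intros x. cbv beta. rewrite unpair1_cpair, unpair2_cpair. reflexivity.
Qed.

(* Syntactic matching: [enc_bool b] unfolds to an [if], so trying [recursive_if] on it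
   by unification would loop. *)
Ltac recursive_step :=
  match goal with
  | |- recursive (fun _ => enc_bool (andb _ _)) => apply recursive_andb
  | |- recursive (fun _ => enc_bool (orb _ _)) => apply recursive_orb
  | |- recursive (fun _ => enc_bool (negb _)) => apply recursive_negb
  | |- recursive (fun _ => enc_bool (Nat.leb _ _)) => apply recursive_leb
  | |- recursive (fun _ => enc_bool (Nat.ltb _ _)) => apply recursive_ltb
  | |- recursive (fun _ => enc_bool (Nat.eqb _ _)) => apply recursive_eqb
  | |- recursive (fun _ => enc_bool (dec_bool _)) => apply recursive_dec_bool
  | |- recursive (fun _ => if _ then _ else _) => apply recursive_if
  | |- recursive (fun _ => match _ with O => _ | S _ => _ end) => apply recursive_ifz
  | |- recursive (fun _ => S _) => apply recursive_S
  | |- recursive (fun _ => unpair1 _) => apply recursive_unpair1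
  | |- recursive (fun _ => unpair2 _) => apply recursive_unpair2
  | |- recursive (fun _ => cpair _ _) => apply recursive_cpair
  | |- recursive (fun _ => _ + _) => apply recursive_add
  | |- recursive (fun _ => _ * _) => apply recursive_mul
  | |- recursive (fun _ => pred _) => apply recursive_pred
  | |- recursive (fun _ => _ - _) => apply recursive_sub
  | |- recursive (fun _ => _ / 2) => apply recursive_div2
  | |- recursive (fun _ => _ mod 2) => apply recursive_mod2
  | |- recursive (fun _ => Nat.iter _ _ _) => apply recursive_iter
  | |- recursive (fun x => x) => apply recursive_id
  | |- recursive unpair1 => apply (recursive_unpair1 _ recursive_id)
  | |- recursive unpair2 => apply (recursive_unpair2 _ recursive_id)
  | |- recursive (fun _ => _) => apply recursive_const
  end.

(* Extended below by the operations on situation codes. *)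
Ltac recursive_step_ext := fail.

Ltac recursive_closure := repeat (assumption || recursive_step || recursive_step_ext).

(** * Codes of situations *)

Definition sit_cons (b e : nat) : nat := S (cpair b e).
Definition sit_head (e : nat) : nat := unpair1 (pred e).
Definition sit_tail (e : nat) : nat := unpair2 (pred e).

Lemma sit_head_enc b s : sit_head (enc_sit (b :: s)) = enc_bool b.
Proof. apply unpair1_cpair. Qed.

Lemma sit_tail_enc b s : sit_tail (enc_sit (b :: s)) = enc_sit s.
Proof. apply unpair2_cpair. Qed.

Lemma enc_bool_inj a b : enc_bool a = enc_bool b -> a = b.
Proof. destruct a, b; simpl; congruence. Qed.

Lemma enc_sit_inj s t : enc_sit s = enc_sit t -> s = t.
Proof.
  revert t. induction s as [|a s IH]; intros [|b t]; simpl; try congruence.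
  intros H. injection H as H. apply cpair_inj in H. destruct H as [Hab Hst].
  apply enc_bool_inj in Hab. apply IH in Hst. congruence.
Qed.

Lemma length_le_enc_sit s : length s <= enc_sit s.
Proof.
  induction s as [|b s IH]; simpl; auto.
  pose proof (unpair2_le (cpair (enc_bool b) (enc_sit s))). rewrite unpair2_cpair in *. lia.
Qed.

(* The state is [cpair rest acc]: the unread list code and the accumulator. *)
Definition scan_step (G : nat -> nat -> nat) (z : nat) : nat :=
  match unpair1 z with
  | O => z
  | S _ => cpair (sit_tail (unpair1 z)) (G (sit_head (unpair1 z)) (unpair2 z))
  end.

Lemma recursive_scan_step G :
  recursive (fun z => G (unpair1 z) (unpair2 z)) -> recursive (scan_step G).
Proof.
  intros HG. unfold scan_step, sit_tail, sit_head. recursive_closure.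
  apply (recursive_binary G); recursive_closure.
Qed.

Lemma iter_scan_step G k s a :
  Nat.iter k (scan_step G) (cpair (enc_sit s) a) =
  cpair (enc_sit (skipn k s)) (fold_left (fun acc b => G (enc_bool b) acc) (firstn k s) a).
Proof.
  revert s a. induction k as [|k IH]; intros s a; [reflexivity|].
  rewrite Nat.iter_succ_r. destruct s as [|b s].
  - assert (Hnil : forall m, Nat.iter m (scan_step G) (cpair 0 a) = cpair 0 a).
    { induction m; simpl; auto. rewrite IHm. unfold scan_step. rewrite unpair1_cpair. auto. }
    unfold scan_step at 2. rewrite unpair1_cpair. apply Hnil.
  - unfold scan_step at 2. simpl enc_sit. rewrite unpair1_cpair, unpair2_cpair.
    change (S (cpair (enc_bool b) (enc_sit s))) with (enc_sit (b :: s)).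
    rewrite sit_head_enc, sit_tail_enc, IH. reflexivity.
Qed.

Lemma iter_scan_step_invariant G (P : nat -> Prop) k r a :
  P a -> (forall h acc, P acc -> P (G h acc)) ->
  exists r' a', Nat.iter k (scan_step G) (cpair r a) = cpair r' a' /\ P a'.
Proof.
  intros Ha HG. induction k as [|k IH]; [exists r, a; auto|].
  destruct IH as (r' & a' & E & Pa). simpl. rewrite E.
  unfold scan_step. rewrite unpair1_cpair. destruct r'; eauto.
  rewrite unpair2_cpair. eauto.
Qed.

Definition rev_step : nat -> nat :=
  scan_step (fun b acc => sit_cons (enc_bool (dec_bool b)) acc).

Lemma recursive_rev_step : recursive rev_step.
Proof. apply recursive_scan_step. unfold sit_cons. recursive_closure. Qed.

Lemma fold_rev_step l acc :
  fold_left (fun a b => sit_cons (enc_bool (dec_bool (enc_bool b))) a) l (enc_sit acc) =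
  enc_sit (rev l ++ acc).
Proof.
  revert acc. induction l as [|b l IH]; intros acc; [reflexivity|].
  simpl. rewrite dec_bool_enc. change (sit_cons (enc_bool b) (enc_sit acc)) with (enc_sit (b :: acc)).
  rewrite IH, <- app_assoc. reflexivity.
Qed.

Definition sit_rev (e : nat) : nat := unpair2 (Nat.iter e rev_step (cpair e 0)).

(* [sit_take j] reverses the first [j] entries twice. *)
Definition sit_take (j e : nat) : nat := sit_rev (unpair2 (Nat.iter j rev_step (cpair e 0))).

Definition sit_length (e : nat) : nat :=
  unpair2 (Nat.iter e (scan_step (fun _ acc => S acc)) (cpair e 0)).

(* Maps every number to a valid situation code, and fixes valid codes. *)
Definition sit_normalize (x : nat) : nat := sit_rev (sit_rev x).

Lemma sit_rev_enc s : sit_rev (enc_sit s) = enc_sit (rev s).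
Proof.
  unfold sit_rev, rev_step. change (cpair (enc_sit s) 0) with (cpair (enc_sit s) (enc_sit [])).
  rewrite iter_scan_step, unpair2_cpair, firstn_all2 by apply length_le_enc_sit.
  rewrite fold_rev_step, app_nil_r. reflexivity.
Qed.

Lemma sit_rev_valid x : exists s, sit_rev x = enc_sit s.
Proof.
  unfold sit_rev, rev_step.
  destruct (iter_scan_step_invariant (fun b acc => sit_cons (enc_bool (dec_bool b)) acc)
              (fun a => exists s, a = enc_sit s) x x 0) as (r & a & E & [s Hs]).
  - exists []. reflexivity.
  - intros h acc [s ->]. exists (dec_bool h :: s). reflexivity.
  - exists s. rewrite E, unpair2_cpair. auto.
Qed.

Lemma sit_take_enc j s : sit_take j (enc_sit s) = enc_sit (firstn j s).
Proof.
  unfold sit_take, rev_step. change (cpair (enc_sit s) 0) with (cpair (enc_sit s) (enc_sit [])).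
  rewrite iter_scan_step, unpair2_cpair, fold_rev_step, app_nil_r, sit_rev_enc, rev_involutive.
  reflexivity.
Qed.

Lemma sit_length_enc s : sit_length (enc_sit s) = length s.
Proof.
  unfold sit_length. rewrite iter_scan_step, unpair2_cpair, firstn_all2 by apply length_le_enc_sit.
  assert (Hfold : forall (l : list bool) a, fold_left (fun acc _ => S acc) l a = length l + a).
  { induction l; intros; simpl; auto. rewrite IHl. lia. }
  rewrite Hfold. lia.
Qed.

Lemma sit_normalize_enc s : sit_normalize (enc_sit s) = enc_sit s.
Proof. unfold sit_normalize. rewrite !sit_rev_enc, rev_involutive. reflexivity. Qed.

Lemma sit_normalize_valid x : exists s, sit_normalize x = enc_sit s.
Proof.
  unfold sit_normalize. destruct (sit_rev_valid x) as [s ->].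
  rewrite sit_rev_enc. eauto.
Qed.

Definition decode_sit (x : nat) : list bool :=
  proj1_sig (constructive_indefinite_description _ (sit_normalize_valid x)).

Lemma sit_normalize_decode x : sit_normalize x = enc_sit (decode_sit x).
Proof. unfold decode_sit. destruct (constructive_indefinite_description _ _). auto. Qed.

Lemma decode_sit_enc s : decode_sit (enc_sit s) = s.
Proof. apply enc_sit_inj. rewrite <- sit_normalize_decode. apply sit_normalize_enc. Qed.

Lemma recursive_sit_rev f : recursive f -> recursive (fun x => sit_rev (f x)).
Proof.
  intros Hf. pose proof recursive_rev_step. unfold sit_rev. recursive_closure.
Qed.

Lemma recursive_sit_take f g : recursive f -> recursive g -> recursive (fun x => sit_take (f x) (g x)).
Proof.
  intros Hf Hg. pose proof recursive_rev_step. unfold sit_take.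
  apply recursive_sit_rev. recursive_closure.
Qed.

Lemma recursive_sit_length f : recursive f -> recursive (fun x => sit_length (f x)).
Proof.
  intros Hf. unfold sit_length.
  assert (recursive (scan_step (fun _ acc => S acc))) by (apply recursive_scan_step; recursive_closure).
  recursive_closure.
Qed.

Lemma recursive_sit_normalize f : recursive f -> recursive (fun x => sit_normalize (f x)).
Proof. intros Hf. unfold sit_normalize. do 2 apply recursive_sit_rev. auto. Qed.

Ltac recursive_step_ext ::=
  match goal with
  | |- recursive (fun _ => sit_take _ _) => apply recursive_sit_take
  | |- recursive (fun _ => sit_length _) => apply recursive_sit_length
  | |- recursive (fun _ => sit_normalize _) => apply recursive_sit_normalize
  end.

Lemma recursive_of_sit_code (c : code) (g : list bool -> nat -> nat) :
  (forall s n, ev c (cpair (enc_sit s) n) (g s n)) ->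
  recursive (fun x => g (decode_sit (unpair1 x)) (unpair2 x)).
Proof.
  intros H. apply (recursive_code_comp c (fun x => cpair (sit_normalize (unpair1 x)) (unpair2 x))).
  - recursive_closure.
  - intros x. rewrite sit_normalize_decode. apply H.
Qed.

Lemma recursive_of_sitx_code (c : code) (g : list bool * bool -> nat -> nat) :
  (forall p n, ev c (cpair (enc_sitx p) n) (g p n)) ->
  recursive (fun x => g (decode_sit (unpair1 (unpair1 x)), dec_bool (unpair2 (unpair1 x))) (unpair2 x)).
Proof.
  intros H.
  apply (recursive_code_comp c (fun x => cpair (cpair (sit_normalize (unpair1 (unpair1 x)))
                                                (enc_bool (dec_bool (unpair2 (unpair1 x)))))
                                         (unpair2 x))).
  - recursive_closure.
  - intros x. rewrite sit_normalize_decode.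
    apply (H (decode_sit (unpair1 (unpair1 x)), dec_bool (unpair2 (unpair1 x)))).
Qed.

Lemma recursive_of_selection (Sel : list bool -> bool) :
  recursive_selection Sel -> recursive (fun x => enc_bool (Sel (decode_sit x))).
Proof.
  intros [c H]. apply (recursive_code_comp c sit_normalize).
  - apply (recursive_sit_normalize _ recursive_id).
  - intros x. rewrite sit_normalize_decode. apply H.
Qed.

(** * Codes of rationals and bounded search *)

Lemma Rdiv_lt_iff (x y u v : R) :
  (0 < y)%R -> (0 < v)%R -> (x / y < u / v <-> x * v < u * y)%R.
Proof.
  intros Hy Hv.
  replace (x / y)%R with ((x * v) / (y * v))%R by (field; lra).
  replace (u / v)%R with ((u * y) / (y * v))%R by (field; lra).
  split; intros H.
  - apply Rmult_lt_reg_r with (/ (y * v))%R; [apply Rinv_0_lt_compat; nra | exact H].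
  - apply Rmult_lt_compat_r; [apply Rinv_0_lt_compat; nra | exact H].
Qed.

Lemma ratio_lt_iff a b u v :
  0 < b -> 0 < v -> a * v < u * b <-> (INR a / INR b < INR u / INR v)%R.
Proof.
  intros Hb Hv. rewrite Rdiv_lt_iff by (apply lt_0_INR; lia).
  rewrite <- !mult_INR. split; [apply lt_INR | apply INR_lt].
Qed.

Lemma INR_div_nonneg a b : (0 <= INR a / INR b)%R.
Proof.
  destruct b; [unfold Rdiv; change (INR 0) with 0%R; rewrite Rinv_0, Rmult_0_r; lra|].
  apply Rle_mult_inv_pos; [apply pos_INR | apply lt_0_INR; lia].
Qed.

(* [enc_Z] sends nonnegative integers to even numbers and negative ones to odd numbers. *)
Lemma Q2R_enc_Q_even q :
  unpair1 (enc_Q q) mod 2 = 0 ->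
  Q2R q = (INR (unpair1 (enc_Q q) / 2) / INR (S (unpair2 (enc_Q q))))%R.
Proof.
  unfold enc_Q, Q2R. rewrite unpair1_cpair, unpair2_cpair.
  destruct q as [[|p|p] d]; cbn [Qnum Qden]; unfold enc_Z; intros Hev.
  - simpl. unfold Rdiv. rewrite !Rmult_0_l. reflexivity.
  - rewrite (Nat.mul_comm 2), Nat.div_mul by lia.
    replace (S (Pos.to_nat d - 1)) with (Pos.to_nat d) by lia.
    rewrite !INR_IZR_INZ, !positive_nat_Z. reflexivity.
  - exfalso. pose proof (Pos2Nat.is_pos p).
    replace (2 * Pos.to_nat p - 1) with (1 + (Pos.to_nat p - 1) * 2) in Hev by lia.
    rewrite Nat.Div0.mod_add in Hev. discriminate.
Qed.

Lemma Q2R_enc_Q_odd q : unpair1 (enc_Q q) mod 2 <> 0 -> (Q2R q < 0)%R.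
Proof.
  unfold enc_Q, Q2R. rewrite unpair1_cpair.
  destruct q as [[|p|p] d]; cbn [Qnum Qden]; unfold enc_Z; intros Hodd.
  - exfalso. apply Hodd. reflexivity.
  - exfalso. apply Hodd. rewrite Nat.mul_comm. apply Nat.Div0.mod_mul.
  - apply Rmult_neg_pos; [apply IZR_lt; lia | apply Rinv_0_lt_compat, IZR_lt; lia].
Qed.

Definition ratio_lt_Q_code (u v o : nat) : bool :=
  (unpair1 o mod 2 =? 0) && (u * S (unpair2 o) <? unpair1 o / 2 * v).

Definition Q_code_lt_ratio (u v o : nat) : bool :=
  negb (unpair1 o mod 2 =? 0) || (unpair1 o / 2 * v <? u * S (unpair2 o)).

Lemma ratio_lt_Q_code_spec u v q :
  0 < v -> ratio_lt_Q_code u v (enc_Q q) = true <-> (INR u / INR v < Q2R q)%R.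
Proof.
  intros Hv. unfold ratio_lt_Q_code.
  destruct (Nat.eq_dec (unpair1 (enc_Q q) mod 2) 0) as [Hev|Hodd].
  - rewrite Hev, Nat.eqb_refl, andb_true_l, Nat.ltb_lt, Q2R_enc_Q_even by exact Hev.
    apply ratio_lt_iff; lia.
  - apply Nat.eqb_neq in Hodd as Hb. rewrite Hb. simpl.
    pose proof (Q2R_enc_Q_odd q Hodd). pose proof (INR_div_nonneg u v).
    split; [discriminate | lra].
Qed.

Lemma Q_code_lt_ratio_spec u v q :
  0 < v -> Q_code_lt_ratio u v (enc_Q q) = true <-> (Q2R q < INR u / INR v)%R.
Proof.
  intros Hv. unfold Q_code_lt_ratio.
  destruct (Nat.eq_dec (unpair1 (enc_Q q) mod 2) 0) as [Hev|Hodd].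
  - rewrite Hev, Nat.eqb_refl. cbn [negb orb].
    rewrite Nat.ltb_lt, Q2R_enc_Q_even by exact Hev. apply ratio_lt_iff; lia.
  - apply Nat.eqb_neq in Hodd as Hb. rewrite Hb. simpl.
    pose proof (Q2R_enc_Q_odd q Hodd). pose proof (INR_div_nonneg u v).
    split; [lra | reflexivity].
Qed.

Definition Qdiv_pos (q : Q) (P : positive) : Q := Qmake (Qnum q) (Qden q * P).

Definition Q_code_div_pos (P : positive) (o : nat) : nat :=
  cpair (unpair1 o) (S (unpair2 o) * Pos.to_nat P - 1).

Lemma Q_code_div_pos_enc P q : Q_code_div_pos P (enc_Q q) = enc_Q (Qdiv_pos q P).
Proof.
  unfold Q_code_div_pos, enc_Q, Qdiv_pos. rewrite unpair1_cpair, unpair2_cpair. cbn [Qnum Qden].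
  rewrite Pos2Nat.inj_mul. pose proof (Pos2Nat.is_pos (Qden q)).
  replace (S (Pos.to_nat (Qden q) - 1)) with (Pos.to_nat (Qden q)) by lia. reflexivity.
Qed.

Lemma Q2R_Qdiv_pos q P : Q2R (Qdiv_pos q P) = (Q2R q / IZR (Zpos P))%R.
Proof.
  unfold Qdiv_pos, Q2R. simpl. rewrite Pos2Z.inj_mul, mult_IZR. field.
  split; apply not_0_IZR; lia.
Qed.

Lemma recursive_Q_code_div_pos P f : recursive f -> recursive (fun x => Q_code_div_pos P (f x)).
Proof. intros Hf. unfold Q_code_div_pos. recursive_closure. Qed.

Fixpoint first_from (p : nat -> bool) (j fuel : nat) : nat :=
  match fuel with
  | O => j
  | S f => if p j then j else first_from p (S j) f
  end.

Lemma first_from_spec p j f :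
  (exists i, j <= i < j + f /\ p i = true) ->
  j <= first_from p j f /\ p (first_from p j f) = true /\
  (forall i, j <= i < first_from p j f -> p i = false).
Proof.
  revert j. induction f as [|f IH]; intros j (i & Hi & Hpi); [lia|]. simpl.
  destruct (p j) eqn:Hpj; [repeat split; auto; lia|].
  destruct (IH (S j)) as (H1 & H2 & H3).
  - exists i. split; auto. destruct (Nat.eq_dec i j); [congruence | lia].
  - repeat split; auto; [lia|]. intros i' Hi'.
    destruct (Nat.eq_dec i' j); [congruence | apply H3; lia].
Qed.

Lemma first_from_unique p j f k :
  j <= k < j + f -> p k = true -> (forall i, j <= i < k -> p i = false) ->
  first_from p j f = k.
Proof.
  intros Hk Hpk Hlt.
  destruct (first_from_spec p j f) as (H1 & H2 & H3); [exists k; auto|].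
  destruct (lt_eq_lt_dec (first_from p j f) k) as [[H|H]|H]; auto.
  - rewrite Hlt in H2; [discriminate | lia].
  - rewrite H3 in Hpk; [discriminate | lia].
Qed.

(* Search state: [cpair y (cpair j done)], with [y] the parameter of the predicate. *)
Definition search_step (p : nat -> nat -> bool) (z : nat) : nat :=
  match unpair2 (unpair2 z) with
  | O => if p (unpair1 z) (unpair1 (unpair2 z))
         then cpair (unpair1 z) (cpair (unpair1 (unpair2 z)) 1)
         else cpair (unpair1 z) (cpair (S (unpair1 (unpair2 z))) 0)
  | S _ => z
  end.

Lemma iter_search_step p y j m :
  exists d, Nat.iter m (search_step p) (cpair y (cpair j 0)) =
            cpair y (cpair (first_from (p y) j m) d).
Proof.
  assert (Hdone : forall k m, Nat.iter m (search_step p) (cpair y (cpair k 1)) =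
                              cpair y (cpair k 1)).
  { intros k m'. induction m'; simpl; auto.
    rewrite IHm'. unfold search_step. rewrite !unpair2_cpair. reflexivity. }
  revert j. induction m as [|m IH]; intros j; [exists 0; reflexivity|].
  rewrite Nat.iter_succ_r. unfold search_step at 2.
  rewrite !unpair2_cpair, !unpair1_cpair. simpl first_from.
  destruct (p y j); [rewrite Hdone; eauto | apply IH].
Qed.

Lemma recursive_first_from (p : nat -> nat -> bool) y j f :
  recursive (fun z => enc_bool (p (unpair1 z) (unpair2 z))) ->
  recursive y -> recursive j -> recursive f ->
  recursive (fun x => first_from (p (y x)) (j x) (f x)).
Proof.
  intros Hp Hy Hj Hf.
  assert (Hstep : recursive (search_step p)).
  { unfold search_step. recursive_closure.
    apply (recursive_binary (fun a b => enc_bool (p a b))); recursive_closure. }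
  eapply recursive_ext.
  - apply recursive_unpair1, recursive_unpair2,
      (recursive_iter (search_step p) f (fun x => cpair (y x) (cpair (j x) 0)));
      recursive_closure.
  - intros x. cbv beta. destruct (iter_search_step p (y x) (j x) (f x)) as [d ->].
    rewrite unpair2_cpair, unpair1_cpair. reflexivity.
Qed.

(** * Paths and rational approximations *)

Lemma length_prefix w n : length (prefix w n) = n.
Proof. unfold prefix. rewrite length_map, length_seq. reflexivity. Qed.

Lemma firstn_prefix w j n : j <= n -> firstn j (prefix w n) = prefix w j.
Proof.
  intros H. unfold prefix. rewrite firstn_map. f_equal.
  replace n with (j + (n - j)) by lia.
  rewrite seq_app, firstn_app, length_seq, Nat.sub_diag, firstn_O, app_nil_r.
  apply firstn_all2. rewrite length_seq. lia.
Qed.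

Lemma prefix_S w n : prefix w (S n) = prefix w n ++ [w n].
Proof. unfold prefix. rewrite seq_S, map_app. reflexivity. Qed.

Lemma firstn_snoc (s : list bool) x j : j <= length s -> firstn j (s ++ [x]) = firstn j s.
Proof.
  intros H. rewrite firstn_app. replace (j - length s) with 0 by lia.
  rewrite firstn_O, app_nil_r. reflexivity.
Qed.

Open Scope R_scope.

Lemma computable_map_approx {D : Type} (e : D -> nat) (f : D -> R) :
  computable_map e f ->
  exists (c : code) (q : D -> nat -> Q),
    (forall d n, ev c (cpair (e d) n) (enc_Q (q d n))) /\
    (forall d n, Rabs (f d - Q2R (q d n)) < (/ 2) ^ n).
Proof.
  intros [c Hc].
  destruct (functional_choice (fun (dn : D * nat) q =>
              ev c (cpair (e (fst dn)) (snd dn)) (enc_Q q) /\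
              Rabs (f (fst dn) - Q2R q) < (/ 2) ^ snd dn)) as [q Hq].
  { intros [d n]. apply Hc. }
  exists c, (fun d n => q (d, n)). split; intros d n; apply (Hq (d, n)).
Qed.

Lemma Rinv_IZR_pos_le_1 (P : positive) : 0 < / IZR (Zpos P) <= 1.
Proof.
  assert (H1 : 1 <= IZR (Zpos P)) by (apply IZR_le; lia).
  split; [apply Rinv_0_lt_compat; lra|].
  rewrite <- Rinv_1. apply Rinv_le_contravar; lra.
Qed.

Lemma exists_Rinv_IZR_pos_mul_le_1 x : exists P : positive, / IZR (Zpos P) * x <= 1.
Proof.
  destruct (archimed x) as [Hup _].
  exists (Z.to_pos (Z.max 1 (up x))).
  assert (HP : x <= IZR (Zpos (Z.to_pos (Z.max 1 (up x))))).
  { rewrite Z2Pos.id by lia. apply Rlt_le, (Rlt_le_trans _ _ _ Hup), IZR_le. lia. }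
  assert (H0 : 0 < IZR (Zpos (Z.to_pos (Z.max 1 (up x))))) by (apply IZR_lt; lia).
  apply (Rmult_le_reg_l (IZR (Zpos (Z.to_pos (Z.max 1 (up x)))))); [exact H0|].
  rewrite <- Rmult_assoc, Rinv_r, Rmult_1_l, Rmult_1_r; lra.
Qed.

Lemma computable_map_scal_inv_pos {D : Type} (e : D -> nat) (f : D -> R) (P : positive) :
  computable_map e f -> computable_map e (fun d => / IZR (Zpos P) * f d).
Proof.
  intros Hf. destruct (computable_map_approx e f Hf) as (c & q & Hc & Hq).
  destruct (recursive_Q_code_div_pos P (fun x => x) recursive_id) as [cP HcP].
  exists (cComp cP c). intros d n. exists (Qdiv_pos (q d n) P). split.
  - econstructor; [apply Hc|]. rewrite <- Q_code_div_pos_enc. apply HcP.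
  - rewrite Q2R_Qdiv_pos. unfold Rdiv. rewrite (Rmult_comm (Q2R _)).
    rewrite <- Rmult_minus_distr_l, Rabs_mult, Rabs_right by (apply Rle_ge, Rlt_le, Rinv_IZR_pos_le_1).
    pose proof (Rinv_IZR_pos_le_1 P). pose proof (Rabs_pos (f d - Q2R (q d n))).
    specialize (Hq d n). nra.
Qed.

(** * Stopped processes *)

Lemma mult_process_snoc D s x : mult_process D (s ++ [x]) = mult_process D s * D s x.
Proof.
  assert (Haux : forall h, mult_aux D h (s ++ [x]) = mult_aux D h s * D (h ++ s) x).
  { induction s as [|a s IH]; intros h; simpl.
    - rewrite app_nil_r. ring.
    - rewrite IH, <- app_assoc. simpl. ring. }
  apply Haux.
Qed.

Lemma first_from_ext p p' j f :
  (forall i, p i = p' i) -> first_from p j f = first_from p' j f.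
Proof.
  intros E. revert j. induction f as [|f IH]; intros j; simpl; auto.
  rewrite E, IH. reflexivity.
Qed.

Section Stopping.

Variable safe : list bool -> bool.
Variable w0 : list bool.

Definition started (s : list bool) : bool :=
  (length w0 <=? length s)%nat && (enc_sit (firstn (length w0) s) =? enc_sit w0)%nat.

Definition stop_index (s : list bool) : nat :=
  first_from (fun i => (i =? length s)%nat || negb (safe (firstn i s)))
             (length w0) (S (length s)).

Definition stopped (s : list bool) : list bool := firstn (stop_index s) s.

Definition running (s : list bool) : bool :=
  started s && (stop_index s =? length s)%nat && safe s.

Lemma started_spec s :
  started s = true <-> (length w0 <= length s)%nat /\ firstn (length w0) s = w0.
Proof.
  unfold started. rewrite andb_true_iff, Nat.leb_le, Nat.eqb_eq.
  split; intros [H1 H2]; split; auto.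
  - apply enc_sit_inj. auto.
  - rewrite H2. reflexivity.
Qed.

Lemma started_snoc s x : started s = true -> started (s ++ [x]) = true.
Proof.
  rewrite !started_spec, length_app. intros [H1 H2]. simpl.
  split; [lia|]. rewrite firstn_snoc; auto.
Qed.

Lemma started_snoc_first s x :
  started s = false -> started (s ++ [x]) = true -> s ++ [x] = w0.
Proof.
  intros Hs Hsx. apply started_spec in Hsx as [H1 H2].
  rewrite length_app in H1. simpl in H1.
  destruct (Nat.le_gt_cases (length w0) (length s)) as [Hle|Hgt].
  - rewrite firstn_snoc in H2 by exact Hle.
    assert (started s = true) by (apply started_spec; auto). congruence.
  - rewrite firstn_all2 in H2; auto. rewrite length_app. simpl. lia.
Qed.

Lemma stop_index_spec s :
  (length w0 <= length s)%nat ->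
  (length w0 <= stop_index s <= length s)%nat /\
  (forall i, (length w0 <= i < stop_index s)%nat -> safe (firstn i s) = true) /\
  ((stop_index s < length s)%nat -> safe (firstn (stop_index s) s) = false).
Proof.
  intros Hs. unfold stop_index.
  destruct (first_from_spec (fun i => (i =? length s)%nat || negb (safe (firstn i s)))
              (length w0) (S (length s))) as (H1 & H2 & H3).
  { exists (length s). rewrite Nat.eqb_refl. split; [lia | reflexivity]. }
  set (k := first_from _ _ _) in *.
  assert (Hk : (k <= length s)%nat).
  { destruct (Nat.le_gt_cases k (length s)) as [|Hgt]; auto.
    specialize (H3 (length s)). rewrite Nat.eqb_refl in H3. discriminate H3. lia. }
  split; [lia|split].
  - intros i Hi. specialize (H3 i Hi). apply orb_false_iff in H3 as [_ H3].
    apply negb_false_iff. exact H3.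
  - intros Hlt. apply Nat.lt_neq, Nat.eqb_neq in Hlt. rewrite Hlt in H2.
    apply negb_true_iff. exact H2.
Qed.

Lemma stop_index_eq s k :
  (length w0 <= k <= length s)%nat ->
  (forall i, (length w0 <= i < k)%nat -> safe (firstn i s) = true) ->
  ((k < length s)%nat -> safe (firstn k s) = false) ->
  stop_index s = k.
Proof.
  intros Hk Hsafe Hstop. apply first_from_unique; [lia| |].
  - destruct (Nat.eq_dec k (length s)) as [->|Hne]; [rewrite Nat.eqb_refl; reflexivity|].
    rewrite Hstop by lia. apply orb_true_r.
  - intros i Hi. rewrite Hsafe by lia. apply orb_false_iff. split; [apply Nat.eqb_neq; lia|reflexivity].
Qed.

Lemma stopped_start : stopped w0 = w0.
Proof.
  unfold stopped. destruct (stop_index_spec w0 (Nat.le_refl _)) as [Hk _].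
  replace (stop_index w0) with (length w0) by lia. apply firstn_all.
Qed.

Lemma stopped_snoc s x :
  started s = true ->
  stopped (s ++ [x]) = if running s then s ++ [x] else stopped s.
Proof.
  intros Hs. pose proof Hs as Hle. apply started_spec in Hle as [Hle _].
  destruct (stop_index_spec s Hle) as (Hk & Hsafe & Hstop).
  unfold stopped, running. rewrite Hs, andb_true_l.
  destruct ((stop_index s =? length s)%nat && safe s) eqn:Hrun.
  - apply andb_true_iff in Hrun as [Heq Hss]. apply Nat.eqb_eq in Heq.
    assert (Hidx : stop_index (s ++ [x]) = length (s ++ [x])).
    { apply stop_index_eq; rewrite ?length_app; simpl; [lia| |lia].
      intros i Hi. rewrite firstn_snoc by lia.
      destruct (Nat.eq_dec i (length s)) as [->|]; [rewrite firstn_all; auto | apply Hsafe; lia]. }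
    rewrite Hidx. apply firstn_all.
  - assert (Hunsafe : safe (firstn (stop_index s) s) = false).
    { destruct (Nat.eq_dec (stop_index s) (length s)) as [Heq|]; [|apply Hstop; lia].
      rewrite Heq, Nat.eqb_refl in Hrun. rewrite Heq, firstn_all. exact Hrun. }
    assert (Hidx : stop_index (s ++ [x]) = stop_index s).
    { apply stop_index_eq; rewrite ?length_app; simpl; [lia| |].
      - intros i Hi. rewrite firstn_snoc by lia. apply Hsafe. lia.
      - intros _. rewrite firstn_snoc by lia. exact Hunsafe. }
    rewrite Hidx. apply firstn_snoc. lia.
Qed.

Lemma running_stopped s : running s = true -> stopped s = s /\ safe s = true.
Proof.
  unfold running, stopped. rewrite !andb_true_iff, Nat.eqb_eq.
  intros [[_ ->] Hs]. split; [apply firstn_all | exact Hs].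
Qed.

Definition stopped_process (F : list bool -> R) (c : R) (s : list bool) : R :=
  if started s then c * F (stopped s) else 1.

Lemma stopped_process_test phi I F c :
  (forall t, safe t = true -> ilo I <= flo phi t /\ fhi phi t <= ihi I) ->
  (1 <= length w0)%nat -> test_supermartingale (const_fs I) F -> 0 < c -> c * F w0 <= 1 ->
  test_supermartingale phi (stopped_process F c).
Proof.
  intros Hinside Hw0 (HF & HF0 & _) Hc HcF. unfold stopped_process. split; [|split].
  - intros s p Hp. pose proof (fs_ok phi s).
    destruct (started s) eqn:Hs.
    + rewrite !started_snoc, !stopped_snoc by exact Hs.
      destruct (running s) eqn:Hr; [|lra].
      destruct (running_stopped s Hr) as [-> Hsafe].
      destruct (Hinside s Hsafe).
      assert (HI : p * (F (s ++ [true]) - F s) + (1 - p) * (F (s ++ [false]) - F s) <= 0)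
        by (apply HF; simpl; lra).
      nra.
    + assert (Hle1 : forall x, (if started (s ++ [x]) then c * F (stopped (s ++ [x])) else 1) <= 1).
      { intros x. destruct (started (s ++ [x])) eqn:Hsx; [|lra].
        rewrite (started_snoc_first s x Hs Hsx), stopped_start. exact HcF. }
      pose proof (Hle1 true). pose proof (Hle1 false). nra.
  - intros s. destruct (started s); [|lra]. specialize (HF0 (stopped s)). nra.
  - destruct (started []) eqn:Hs; [|reflexivity].
    apply started_spec in Hs as [H _]. simpl in H. lia.
Qed.

Lemma stopped_process_prefix F c w N :
  w0 = prefix w N -> (forall n, (N <= n)%nat -> safe (prefix w n) = true) ->
  forall n, (N <= n)%nat -> stopped_process F c (prefix w n) = c * F (prefix w n).
Proof.
  intros Hw0 Hsafe n Hn. unfold stopped_process.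
  assert (Hlen : length w0 = N) by (rewrite Hw0; apply length_prefix).
  replace (started (prefix w n)) with true.
  2:{ symmetry. apply started_spec. rewrite length_prefix, Hlen, firstn_prefix; auto. }
  unfold stopped. rewrite (stop_index_eq (prefix w n) n), firstn_all2; rewrite ?length_prefix; auto; try lia.
  - intros i Hi. rewrite firstn_prefix by lia. apply Hsafe. lia.
Qed.

Definition stopped_multiplier (D : list bool -> bool -> R) (s : list bool) (x : bool) : R :=
  if running s then D s x else 1.

Lemma mult_process_stopped D c :
  (1 <= length w0)%nat -> c * mult_process D w0 = 1 ->
  forall s, mult_process (stopped_multiplier D) s = stopped_process (mult_process D) c s.
Proof.
  intros Hw0 Hc s. induction s as [|x s IH] using rev_ind.
  - unfold stopped_process. destruct (started []) eqn:Hs; [|reflexivity].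
    apply started_spec in Hs as [H _]. simpl in H. lia.
  - rewrite mult_process_snoc, IH. unfold stopped_process, stopped_multiplier, running.
    destruct (started s) eqn:Hs; simpl.
    + rewrite started_snoc, stopped_snoc by exact Hs. unfold running. rewrite Hs. simpl.
      destruct ((stop_index s =? length s)%nat && safe s) eqn:Hr; [|ring].
      apply andb_true_iff in Hr as [Hr _]. apply Nat.eqb_eq in Hr.
      unfold stopped. rewrite Hr, firstn_all, mult_process_snoc. ring.
    + destruct (started (s ++ [x])) eqn:Hsx; [|ring].
      rewrite (started_snoc_first s x Hs Hsx), stopped_start. lra.
Qed.

Section Code.

Hypothesis safe_recursive : recursive_selection safe.

Lemma recursive_safe_decode f :
  recursive f -> recursive (fun x => enc_bool (safe (decode_sit (f x)))).
Proof.
  apply (recursive_comp (fun x => enc_bool (safe (decode_sit x)))).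
  apply recursive_of_selection, safe_recursive.
Qed.

Definition stop_test_code (e i : nat) : bool :=
  (i =? sit_length e)%nat || negb (safe (decode_sit (sit_take i e))).

Definition stop_index_code (e : nat) : nat :=
  first_from (stop_test_code e) (length w0) (S (sit_length e)).

Definition started_code (e : nat) : bool :=
  (length w0 <=? sit_length e)%nat && (sit_take (length w0) e =? enc_sit w0)%nat.

Definition running_code (e : nat) : bool :=
  started_code e && (stop_index_code e =? sit_length e)%nat && safe (decode_sit e).

Lemma stop_index_code_enc s : stop_index_code (enc_sit s) = stop_index s.
Proof.
  unfold stop_index_code, stop_index, stop_test_code. rewrite sit_length_enc.
  apply first_from_ext. intros i. rewrite sit_take_enc, decode_sit_enc. reflexivity.
Qed.

Lemma started_code_enc s : started_code (enc_sit s) = started s.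
Proof. unfold started_code, started. rewrite sit_length_enc, sit_take_enc. reflexivity. Qed.

Lemma running_code_enc s : running_code (enc_sit s) = running s.
Proof.
  unfold running_code, running.
  rewrite started_code_enc, stop_index_code_enc, sit_length_enc, decode_sit_enc. reflexivity.
Qed.

Lemma recursive_stop_index_code f : recursive f -> recursive (fun x => stop_index_code (f x)).
Proof.
  intros Hf. unfold stop_index_code.
  apply (recursive_first_from stop_test_code f (fun _ => length w0) (fun x => S (sit_length (f x))));
    recursive_closure.
  unfold stop_test_code. recursive_closure. apply recursive_safe_decode. recursive_closure.
Qed.

Lemma recursive_started_code f : recursive f -> recursive (fun x => enc_bool (started_code (f x))).
Proof. intros Hf. unfold started_code. recursive_closure. Qed.

Lemma recursive_running_code f : recursive f -> recursive (fun x => enc_bool (running_code (f x))).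
Proof.
  intros Hf. unfold running_code. recursive_closure.
  - apply recursive_started_code. auto.
  - apply recursive_stop_index_code. auto.
  - apply recursive_safe_decode. auto.
Qed.

Definition stopped_approx (q : list bool -> nat -> Q) (P : positive) (s : list bool) (n : nat) : Q :=
  if started s then Qdiv_pos (q (stopped s) n) P else 1%Q.

Lemma Q2R_stopped_approx q P s n :
  Q2R (stopped_approx q P s n) = if started s then / IZR (Zpos P) * Q2R (q (stopped s) n) else 1.
Proof.
  unfold stopped_approx. destruct (started s).
  - rewrite Q2R_Qdiv_pos. unfold Rdiv. ring.
  - unfold Q2R. simpl. lra.
Qed.

Lemma stopped_approx_code (c : code) q P :
  (forall s n, ev c (cpair (enc_sit s) n) (enc_Q (q s n))) ->
  exists c', forall s n, ev c' (cpair (enc_sit s) n) (enc_Q (stopped_approx q P s n)).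
Proof.
  intros Hc.
  pose proof (recursive_of_sit_code c (fun s n => enc_Q (q s n)) Hc) as Hq. simpl in Hq.
  assert (Hcode : recursive (fun x =>
     if started_code (unpair1 x)
     then Q_code_div_pos P ((fun y => enc_Q (q (decode_sit (unpair1 y)) (unpair2 y)))
            (cpair (sit_take (stop_index_code (unpair1 x)) (unpair1 x)) (unpair2 x)))
     else enc_Q 1%Q)).
  { apply recursive_if; [apply recursive_started_code; recursive_closure| |recursive_closure].
    apply recursive_Q_code_div_pos, (recursive_comp _ _ Hq). recursive_closure.
    apply recursive_stop_index_code. recursive_closure. }
  destruct Hcode as [c' Hc']. exists c'. intros s n. specialize (Hc' (cpair (enc_sit s) n)).
  cbv beta in Hc'. rewrite !unpair1_cpair, !unpair2_cpair, started_code_enc,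
    stop_index_code_enc, sit_take_enc, decode_sit_enc, Q_code_div_pos_enc in Hc'.
  unfold stopped_approx, stopped. destruct (started s); exact Hc'.
Qed.

Lemma stopped_process_computable T P :
  computable_map enc_sit T -> computable_map enc_sit (stopped_process T (/ IZR (Zpos P))).
Proof.
  intros HT. destruct (computable_map_approx enc_sit T HT) as (c & q & Hc & Hq).
  destruct (stopped_approx_code c q P Hc) as [c' Hc'].
  exists c'. intros s n. exists (stopped_approx q P s n). split; [apply Hc'|].
  rewrite Q2R_stopped_approx. unfold stopped_process. destruct (started s).
  - rewrite <- Rmult_minus_distr_l, Rabs_mult, Rabs_right by (apply Rle_ge, Rlt_le, Rinv_IZR_pos_le_1).
    pose proof (Rinv_IZR_pos_le_1 P). pose proof (Rabs_pos (T (stopped s) - Q2R (q (stopped s) n))).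
    specialize (Hq (stopped s) n). nra.
  - rewrite Rminus_diag, Rabs_R0. apply pow_lt. lra.
Qed.

Lemma stopped_process_lower_semicomputable T P :
  lower_semicomputable_map enc_sit T ->
  lower_semicomputable_map enc_sit (stopped_process T (/ IZR (Zpos P))).
Proof.
  intros (c & q & Hc & Hmono & Hlim).
  destruct (stopped_approx_code c q P Hc) as [c' Hc'].
  pose proof (Rinv_IZR_pos_le_1 P).
  exists c', (stopped_approx q P). split; [|split]; auto.
  - intros s n. rewrite !Q2R_stopped_approx. destruct (started s); [|lra].
    apply Rmult_le_compat_l; [lra | apply Hmono].
  - intros s. eapply is_lim_seq_ext; [intros n; symmetry; apply Q2R_stopped_approx|].
    unfold stopped_process. destruct (started s).
    + apply (is_lim_seq_scal_l _ _ (T (stopped s))), Hlim.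
    + apply is_lim_seq_const.
Qed.

Lemma stopped_multiplier_lower_semicomputable D :
  lower_semicomputable_map enc_sitx (fun p => D (fst p) (snd p)) ->
  lower_semicomputable_map enc_sitx (fun p => stopped_multiplier D (fst p) (snd p)).
Proof.
  intros (c & q & Hc & Hmono & Hlim).
  pose proof (recursive_of_sitx_code c (fun p n => enc_Q (q p n)) Hc) as Hq. simpl in Hq.
  assert (Hcode : recursive (fun x =>
     if running_code (unpair1 (unpair1 x))
     then enc_Q (q (decode_sit (unpair1 (unpair1 x)), dec_bool (unpair2 (unpair1 x))) (unpair2 x))
     else enc_Q 1%Q)).
  { apply recursive_if; [apply recursive_running_code; recursive_closure | exact Hq | recursive_closure]. }
  destruct Hcode as [c' Hc'].
  exists c', (fun p n => if running (fst p) then q p n else 1%Q). split; [|split].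
  - intros [s b] n. specialize (Hc' (cpair (enc_sitx (s, b)) n)). unfold enc_sitx in *.
    cbn [fst snd] in *. rewrite !unpair1_cpair, !unpair2_cpair, running_code_enc,
      decode_sit_enc, dec_bool_enc in Hc'. destruct (running s); exact Hc'.
  - intros [s b] n. cbn [fst]. destruct (running s); [apply Hmono | lra].
  - intros [s b]. unfold stopped_multiplier. cbn [fst snd]. destruct (running s).
    + apply (Hlim (s, b)).
    + eapply is_lim_seq_ext; [|apply is_lim_seq_const]. intros n. unfold Q2R. simpl. lra.
Qed.

End Code.

End Stopping.

(** * Limits along a path *)

Lemma LimSup_seq_spec u : is_LimSup_seq u (LimSup_seq u).
Proof. unfold LimSup_seq. destruct (ex_LimSup_seq u). assumption. Qed.

Lemma LimInf_seq_spec u : is_LimInf_seq u (LimInf_seq u).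
Proof. unfold LimInf_seq. destruct (ex_LimInf_seq u). assumption. Qed.

Lemma Rbar_mult_pos_p_infty c : 0 < c -> Rbar_mult c p_infty = p_infty.
Proof.
  intros Hc. unfold Rbar_mult, Rbar_mult'.
  destruct (Rle_dec 0 c) as [H|]; [|lra].
  destruct (Rle_lt_or_eq_dec 0 c H); [reflexivity | lra].
Qed.

Lemma Rbar_mult_pos_nonneg c l : 0 < c -> Rbar_le 0 l -> Rbar_le 0 (Rbar_mult c l).
Proof.
  intros Hc Hl. destruct l as [l| |]; simpl in Hl.
  - simpl. apply Rmult_le_pos; lra.
  - rewrite Rbar_mult_pos_p_infty by exact Hc. exact I.
  - contradiction.
Qed.

Lemma LimSup_seq_scal_pos_eventually (u v : nat -> R) c :
  0 < c -> eventually (fun n => v n = c * u n) ->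
  LimSup_seq v = Rbar_mult c (LimSup_seq u).
Proof.
  intros Hc [N HN]. apply is_LimSup_seq_unique.
  apply (is_LimSup_seq_ext_loc (fun n => c * u n)).
  - exists N. intros n Hn. symmetry. auto.
  - apply is_LimSup_seq_scal_pos; [exact Hc | apply LimSup_seq_spec].
Qed.

Lemma unbounded_on_scal_pos_eventually (F G : list bool -> R) c w :
  0 < c -> eventually (fun n => G (prefix w n) = c * F (prefix w n)) ->
  unbounded_on F w -> unbounded_on G w.
Proof.
  unfold unbounded_on. intros Hc Hev HF.
  rewrite (LimSup_seq_scal_pos_eventually _ _ c Hc Hev), HF.
  apply Rbar_mult_pos_p_infty, Hc.
Qed.

Lemma LimInf_seq_gt (x : R) u :
  Rbar_lt x (LimInf_seq u) -> exists y, x < y /\ eventually (fun n => y < u n).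
Proof.
  pose proof (LimInf_seq_spec u) as Hu.
  intros H. destruct (LimInf_seq u) as [l| |]; simpl in *.
  - destruct (Hu (mkposreal ((l - x) / 2) ltac:(lra))) as [_ [N HN]]. simpl in HN.
    exists (l - (l - x) / 2). split; [lra | exists N; exact HN].
  - exists (x + 1). split; [lra | apply Hu].
  - contradiction.
Qed.

Lemma LimSup_seq_lt (x : R) u :
  Rbar_lt (LimSup_seq u) x -> exists y, y < x /\ eventually (fun n => u n < y).
Proof.
  pose proof (LimSup_seq_spec u) as Hu.
  intros H. destruct (LimSup_seq u) as [l| |]; simpl in *.
  - destruct (Hu (mkposreal ((x - l) / 2) ltac:(lra))) as [_ [N HN]]. simpl in HN.
    exists (l + (x - l) / 2). split; [lra | exists N; exact HN].
  - contradiction.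
  - exists (x - 1). split; [lra | apply Hu].
Qed.

Lemma LimInf_seq_nonneg_iff u :
  Rbar_le 0 (LimInf_seq u) <-> forall eps, 0 < eps -> eventually (fun n => - eps < u n).
Proof.
  pose proof (LimInf_seq_spec u) as Hu.
  destruct (LimInf_seq u) as [l| |]; simpl in *; split.
  - intros Hl eps Heps. destruct (Hu (mkposreal eps Heps)) as [_ [N HN]].
    exists N. intros n Hn. specialize (HN n Hn). simpl in HN. lra.
  - intros H. destruct (Rle_lt_dec 0 l) as [|Hl]; auto. exfalso.
    destruct (Hu (mkposreal (- l / 2) ltac:(lra))) as [Hfreq _]. simpl in Hfreq.
    destruct (H (- l / 2) ltac:(lra)) as [N HN]. destruct (Hfreq N) as (n & Hn & Hun).
    specialize (HN n Hn). lra.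
  - intros _ eps Heps. destruct (Hu (- eps)) as [N HN]. exists N. exact HN.
  - auto.
  - intros [].
  - intros H. destruct (H 1 ltac:(lra)) as [N HN]. destruct (Hu (-1) N) as (n & Hn & Hun).
    specialize (HN n Hn). lra.
Qed.

Lemma LimInf_seq_nonneg_perturb (u v e : nat -> R) :
  Rbar_le 0 (LimInf_seq u) -> is_lim_seq e 0 -> eventually (fun n => u n - e n <= v n) ->
  Rbar_le 0 (LimInf_seq v).
Proof.
  rewrite !LimInf_seq_nonneg_iff. intros Hu He [N Hle] eps Heps.
  destruct (Hu (eps / 2) ltac:(lra)) as [N1 HN1].
  apply is_lim_seq_spec in He. destruct (He (mkposreal (eps / 2) ltac:(lra))) as [N2 HN2].
  exists (Nat.max N (Nat.max N1 N2)). intros n Hn.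
  specialize (Hle n ltac:(lia)). specialize (HN1 n ltac:(lia)). specialize (HN2 n ltac:(lia)).
  simpl in HN2. apply Rabs_def2 in HN2. lra.
Qed.

Lemma LimSup_seq_nonpos_iff u :
  Rbar_le (LimSup_seq u) 0 <-> Rbar_le 0 (LimInf_seq (fun n => - u n)).
Proof.
  rewrite LimInf_seq_opp.
  destruct (LimSup_seq u) as [l| |]; simpl; [split; intros; lra | tauto | tauto].
Qed.

Lemma LimSup_seq_nonpos_perturb (u v e : nat -> R) :
  Rbar_le (LimSup_seq u) 0 -> is_lim_seq e 0 -> eventually (fun n => v n <= u n + e n) ->
  Rbar_le (LimSup_seq v) 0.
Proof.
  rewrite !LimSup_seq_nonpos_iff. intros Hu He [N Hle].
  apply (LimInf_seq_nonneg_perturb _ _ e Hu He). exists N. intros n Hn.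
  specialize (Hle n Hn). lra.
Qed.

Lemma is_lim_seq_div_p_infty K (c : nat -> R) :
  is_lim_seq c p_infty -> is_lim_seq (fun n => K / c n) 0.
Proof.
  intros Hc. pose proof (is_lim_seq_scal_l _ K _ (is_lim_seq_inv c p_infty Hc ltac:(discriminate))) as H.
  simpl in H. rewrite Rmult_0_r in H. exact H.
Qed.

Lemma rsum_plus n f g : rsum n (fun k => f k + g k) = rsum n f + rsum n g.
Proof. induction n as [|n IH]; simpl; [ring | rewrite IH; ring]. Qed.

Lemma rsum_ext n f g : (forall k, f k = g k) -> rsum n f = rsum n g.
Proof. intros H. induction n as [|n IH]; simpl; [reflexivity | rewrite IH, H; reflexivity]. Qed.

Lemma rsum_opp n f : rsum n (fun k => - f k) = - rsum n f.
Proof. induction n as [|n IH]; simpl; [ring | rewrite IH; ring]. Qed.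

Lemma rsum_ge_eventually_nonneg n N f :
  (forall k, -1 <= f k) -> (forall k, (N <= k)%nat -> 0 <= f k) -> - INR N <= rsum n f.
Proof.
  intros Hlb Hnonneg. assert (H : - INR (Nat.min n N) <= rsum n f).
  { induction n as [|n IH]; [simpl; lra|]. change (rsum (S n) f) with (rsum n f + f n).
    destruct (Nat.le_gt_cases N n) as [Hle|Hgt].
    - rewrite (Nat.min_r n N), (Nat.min_r (S n) N) in * by lia. specialize (Hnonneg n Hle). lra.
    - rewrite (Nat.min_l n N), (Nat.min_l (S n) N) in * by lia. rewrite S_INR.
      specialize (Hlb n). lra. }
  pose proof (le_INR _ _ (Nat.le_min_r n N)). lra.
Qed.

Lemma rsum_mul_split n (sel a b c : nat -> R) :
  rsum n (fun k => sel k * (a k - c k)) =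
  rsum n (fun k => sel k * (a k - b k)) + rsum n (fun k => sel k * (b k - c k)).
Proof. rewrite <- rsum_plus. apply rsum_ext. intros k. ring. Qed.

(* Before phi enters I each round shifts the selected sum by at most 1, and this
   bounded shift is negligible against the diverging selection count. *)
Lemma CH_condition_transfer phi I w Sel :
  eventually (fun n => ilo I <= flo phi (prefix w n) /\ fhi phi (prefix w n) <= ihi I) ->
  CH_condition phi w Sel -> CH_condition (const_fs I) w Sel.
Proof.
  intros [N HN] HC Hcnt. destruct (HC Hcnt) as [Hlo Hhi]. simpl.
  set (sel := fun k => if Sel (prefix w k) then 1 else 0) in *.
  set (cnt := sel_count Sel w) in *.
  assert (Hsel : forall k, 0 <= sel k <= 1) by (intros k; unfold sel; destruct (Sel _); lra).
  assert (Hgap : forall g, (forall k, -1 <= g k) -> (forall k, (N <= k)%nat -> 0 <= g k) ->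
            forall n, - INR N <= rsum n (fun k => sel k * g k)).
  { intros g Hg Hg0 n. apply rsum_ge_eventually_nonneg.
    - intros k. specialize (Hsel k). specialize (Hg k). nra.
    - intros k Hk. specialize (Hsel k). specialize (Hg0 k Hk). nra. }
  assert (Hpos : eventually (fun n => 0 < cnt n)).
  { apply is_lim_seq_spec in Hcnt. apply (Hcnt 0). }
  destruct Hpos as [N' Hpos].
  pose proof (is_lim_seq_div_p_infty (INR N) cnt Hcnt) as Hsmall.
  pose proof (interval_ok I).
  split.
  - apply (LimInf_seq_nonneg_perturb _ _ _ Hlo Hsmall). exists N'. intros n Hn.
    rewrite (rsum_mul_split n sel _ (fun k => flo phi (prefix w k)) (fun _ => ilo I)).
    assert (Hshift : - INR N <= rsum n (fun k => sel k * (flo phi (prefix w k) - ilo I))).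
    { apply Hgap; intros k; [pose proof (fs_ok phi (prefix w k)) | intros Hk; destruct (HN k Hk)];
        lra. }
    specialize (Hpos n Hn). unfold Rdiv. rewrite <- Rmult_minus_distr_r.
    apply Rmult_le_compat_r; [apply Rlt_le, Rinv_0_lt_compat, Hpos | unfold sel in *; lra].
  - apply (LimSup_seq_nonpos_perturb _ _ _ Hhi Hsmall). exists N'. intros n Hn.
    rewrite (rsum_mul_split n sel _ (fun k => fhi phi (prefix w k)) (fun _ => ihi I)).
    assert (Hshift : - INR N <= rsum n (fun k => sel k * (ihi I - fhi phi (prefix w k)))).
    { apply Hgap; intros k; [pose proof (fs_ok phi (prefix w k)) | intros Hk; destruct (HN k Hk)];
        lra. }
    replace (rsum n (fun k => sel k * (fhi phi (prefix w k) - ihi I)))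
      with (- rsum n (fun k => sel k * (ihi I - fhi phi (prefix w k))))
      by (rewrite <- rsum_opp; apply rsum_ext; intros; ring).
    specialize (Hpos n Hn). unfold Rdiv. rewrite <- Rmult_plus_distr_r.
    apply Rmult_le_compat_r; [apply Rlt_le, Rinv_0_lt_compat, Hpos | unfold sel in *; lra].
Qed.

(** * Transfer of randomness to a constant interval *)

Lemma test_supermartingale_ext phi F G :
  (forall s, F s = G s) -> test_supermartingale phi F -> test_supermartingale phi G.
Proof.
  intros E (HF & HF0 & HF1). split; [|split].
  - intros s p Hp. rewrite <- !E. apply HF, Hp.
  - intros s. rewrite <- E. apply HF0.
  - rewrite <- E. exact HF1.
Qed.

Section Transfer.

Variables (phi : forecasting_system) (I : interval) (safe : list bool -> bool).
Variables (w : nat -> bool) (N : nat).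
Hypothesis safe_recursive : recursive_selection safe.
Hypothesis safe_inside : forall t, safe t = true -> ilo I <= flo phi t /\ fhi phi t <= ihi I.
Hypothesis safe_from_N : forall n, (N <= n)%nat -> safe (prefix w n) = true.

(* The start is taken at length [S N] so that it is nonempty. *)
Let start := prefix w (S N).

Lemma start_length : (1 <= length start)%nat.
Proof. unfold start. rewrite length_prefix. lia. Qed.

Lemma stopped_process_eventually F c :
  eventually (fun n => stopped_process safe start F c (prefix w n) = c * F (prefix w n)).
Proof.
  exists (S N). apply (stopped_process_prefix safe start F c w (S N) eq_refl).
  intros n Hn. apply safe_from_N. lia.
Qed.

Lemma stopped_test T P :
  test_supermartingale (const_fs I) T -> / IZR (Zpos P) * T start <= 1 ->
  test_supermartingale phi (stopped_process safe start T (/ IZR (Zpos P))).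
Proof.
  intros HT HP. apply (stopped_process_test safe start phi I); auto using start_length.
  apply Rinv_IZR_pos_le_1.
Qed.

Lemma ML_random_transfer : ML_random phi w -> ML_random (const_fs I) w.
Proof.
  intros Hr (T & HT & Hlsc & Hunb). apply Hr.
  destruct (exists_Rinv_IZR_pos_mul_le_1 (T start)) as [P HP].
  exists (stopped_process safe start T (/ IZR (Zpos P))). split; [|split].
  - apply stopped_test; assumption.
  - apply stopped_process_lower_semicomputable; assumption.
  - apply (unbounded_on_scal_pos_eventually T _ (/ IZR (Zpos P)));
      auto using stopped_process_eventually. apply Rinv_IZR_pos_le_1.
Qed.

Lemma C_random_transfer : C_random phi w -> C_random (const_fs I) w.
Proof.
  intros Hr (T & HT & Hcomp & Hunb). apply Hr.
  destruct (exists_Rinv_IZR_pos_mul_le_1 (T start)) as [P HP].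
  exists (stopped_process safe start T (/ IZR (Zpos P))). split; [|split].
  - apply stopped_test; assumption.
  - apply stopped_process_computable; assumption.
  - apply (unbounded_on_scal_pos_eventually T _ (/ IZR (Zpos P)));
      auto using stopped_process_eventually. apply Rinv_IZR_pos_le_1.
Qed.

Lemma S_random_transfer : S_random phi w -> S_random (const_fs I) w.
Proof.
  intros Hr (T & tau & HT & Hcomp & Htau & Htau0 & Htau_mono & Htau_lim & Hls). apply Hr.
  destruct (exists_Rinv_IZR_pos_mul_le_1 (T start)) as [P HP].
  set (c := / IZR (Zpos P)). assert (Hc : 0 < c <= 1) by apply Rinv_IZR_pos_le_1.
  exists (stopped_process safe start T c), (fun n => c * tau n).
  split; [|split; [|split; [|split; [|split; [|split]]]]].
  - apply stopped_test; assumption.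
  - apply stopped_process_computable; assumption.
  - apply computable_map_scal_inv_pos; assumption.
  - intros n. specialize (Htau0 n). nra.
  - intros n. specialize (Htau_mono n). nra.
  - pose proof (is_lim_seq_scal_l tau c p_infty Htau_lim) as H.
    rewrite Rbar_mult_pos_p_infty in H by lra. exact H.
  - rewrite (LimSup_seq_scal_pos_eventually (fun n => T (prefix w n) - tau n) _ c) by
      (try lra; destruct (stopped_process_eventually T c) as [M HM];
       exists M; intros n Hn; rewrite HM by exact Hn; ring).
    apply Rbar_mult_pos_nonneg; [lra | exact Hls].
Qed.

Lemma wML_random_transfer : wML_random phi w -> wML_random (const_fs I) w.
Proof.
  intros Hr (D & Hlsc & HT & Hunb). apply Hr.
  set (F := mult_process D) in *.
  assert (HF_start : 0 < F start).
  { destruct HT as (_ & HF0 & _). destruct (HF0 start) as [|Hzero]; auto. exfalso.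
    assert (Hvanish : forall n, (S N <= n)%nat -> F (prefix w n) = 0).
    { intros n Hn. induction Hn as [|n Hn IH]; [symmetry; exact Hzero|].
      unfold F. rewrite prefix_S, mult_process_snoc. fold F. rewrite IH. ring. }
    unfold unbounded_on in Hunb.
    rewrite (is_LimSup_seq_unique _ 0) in Hunb; [discriminate|].
    apply (is_LimSup_seq_ext_loc (fun _ => 0)); [|apply is_LimSup_seq_const].
    exists (S N). intros n Hn. symmetry. apply Hvanish, Hn. }
  set (c := / F start).
  assert (Hc : c * F start = 1) by (unfold c; field; lra).
  assert (Hmult := mult_process_stopped safe start D c start_length Hc).
  exists (stopped_multiplier safe start D). split; [|split].
  - apply stopped_multiplier_lower_semicomputable; assumption.
  - apply (test_supermartingale_ext phi (stopped_process safe start F c)).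
    + intros s. symmetry. apply Hmult.
    + apply (stopped_process_test safe start phi I); auto using start_length; [|lra].
      apply Rinv_0_lt_compat, HF_start.
  - apply (unbounded_on_scal_pos_eventually F _ c); auto.
    + apply Rinv_0_lt_compat, HF_start.
    + destruct (stopped_process_eventually F c) as [M HM]. exists M. intros n Hn.
      rewrite Hmult. apply HM, Hn.
Qed.

Lemma random_transfer Rn : random Rn phi w -> random Rn (const_fs I) w.
Proof.
  assert (Hinside : eventually (fun n => ilo I <= flo phi (prefix w n) /\
                                         fhi phi (prefix w n) <= ihi I)).
  { exists N. intros n Hn. apply safe_inside, safe_from_N, Hn. }
  destruct Rn; simpl.
  - apply ML_random_transfer.
  - apply wML_random_transfer.
  - apply C_random_transfer.
  - apply S_random_transfer.
  - intros Hr Sel HSel. apply (CH_condition_transfer phi I w Sel Hinside), Hr, HSel.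
  - intros Hr Sel HSel Htemp. apply (CH_condition_transfer phi I w Sel Hinside), Hr; assumption.
Qed.

End Transfer.

Lemma random_const_of_eventually_safe Rn phi I safe w :
  recursive_selection safe ->
  (forall t, safe t = true -> ilo I <= flo phi t /\ fhi phi t <= ihi I) ->
  eventually (fun n => safe (prefix w n) = true) ->
  random Rn phi w -> random Rn (const_fs I) w.
Proof. intros Hrec Hinside [N HN]. apply (random_transfer phi I safe w N); assumption. Qed.

Definition unit_interval : interval := mkInterval 0 1 ltac:(lra).

Lemma random_unit_interval Rn phi w : random Rn phi w -> random Rn (const_fs unit_interval) w.
Proof.
  apply (random_const_of_eventually_safe Rn phi unit_interval (fun _ => true)).
  - exists (cComp cSucc cZero). intros s. repeat econstructor.
  - intros t _. pose proof (fs_ok phi t). simpl. lra.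
  - exists 0%nat. reflexivity.
Qed.

(** * Computable thresholds *)

Lemma rational_between x y : 0 <= x < y -> exists u v : nat, (0 < v)%nat /\ x < INR u / INR v < y.
Proof.
  intros [Hx Hxy]. destruct (INR_archimed (y - x) 1 ltac:(lra)) as [v Hv].
  assert (Hv0 : (0 < v)%nat) by (destruct v; [simpl in Hv; lra | lia]).
  assert (HvR : 0 < INR v) by (apply lt_0_INR; exact Hv0).
  destruct (archimed (x * INR v)) as [Hup1 Hup2].
  assert (Hup : (0 < up (x * INR v))%Z) by (apply lt_IZR; nra).
  exists (Z.to_nat (up (x * INR v))), v. split; [exact Hv0|].
  rewrite INR_IZR_INZ, Z2Nat.id by lia.
  split; apply (Rmult_lt_reg_r (INR v)); auto; unfold Rdiv;
    rewrite Rmult_assoc, Rinv_l, Rmult_1_r by lra; nra.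
Qed.

Lemma pow_half_lt eps : 0 < eps -> exists M, (/ 2) ^ M < eps.
Proof.
  intros Heps. destruct (pow_lt_1_zero (/ 2) ltac:(rewrite Rabs_right; lra) eps Heps) as [M HM].
  exists M. specialize (HM M (Nat.le_refl M)).
  rewrite Rabs_right in HM; [exact HM | apply Rle_ge, pow_le; lra].
Qed.

(* Comparing a [2^-M]-approximation with [u / v] separates values below [x] from
   values above [y]. *)
Lemma rational_with_margin x y :
  0 <= x < y -> exists u v M, (0 < v)%nat /\ x + (/ 2) ^ M < INR u / INR v /\
                              INR u / INR v + (/ 2) ^ M < y.
Proof.
  intros Hxy.
  destruct (rational_between (x + (y - x) / 3) (x + 2 * (y - x) / 3)) as (u & v & Hv & Hb);
    [lra|].
  destruct (pow_half_lt ((y - x) / 3)) as [M HM]; [lra|].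
  exists u, v, M. split; [exact Hv | lra].
Qed.

Lemma computable_approx_selection (f : list bool -> R) (M : nat) (test : nat -> bool) :
  computable_map enc_sit f ->
  (forall g, recursive g -> recursive (fun x => enc_bool (test (g x)))) ->
  exists q : list bool -> nat -> Q,
    (forall t, Rabs (f t - Q2R (q t M)) < (/ 2) ^ M) /\
    recursive_selection (fun t => test (enc_Q (q t M))).
Proof.
  intros Hf Htest. destruct (computable_map_approx enc_sit f Hf) as (c & q & Hc & Hq).
  exists q. split; [intros t; apply Hq|].
  pose proof (recursive_of_sit_code c (fun s n => enc_Q (q s n)) Hc) as Hcode. simpl in Hcode.
  destruct (Htest _ (recursive_comp _ (fun x => cpair x M) Hcode ltac:(recursive_closure)))
    as [c' Hc'].
  exists c'. intros t. specialize (Hc' (enc_sit t)). cbv beta in Hc'.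
  rewrite unpair1_cpair, unpair2_cpair, decode_sit_enc in Hc'. exact Hc'.
Qed.

Lemma computable_lower_threshold (f : list bool -> R) x y :
  computable_map enc_sit f -> 0 <= x < y ->
  exists a safe, x < a /\ recursive_selection safe /\
    (forall t, safe t = true -> a <= f t) /\ (forall t, y < f t -> safe t = true).
Proof.
  intros Hf Hxy. destruct (rational_with_margin x y Hxy) as (u & v & M & Hv & Hx & Hy).
  destruct (computable_approx_selection f M (ratio_lt_Q_code u v) Hf) as (q & Hq & Hsel).
  { intros g Hg. unfold ratio_lt_Q_code. recursive_closure. }
  exists (INR u / INR v - (/ 2) ^ M), (fun t => ratio_lt_Q_code u v (enc_Q (q t M))).
  split; [lra | split; [exact Hsel | split]]; intros t Ht.
  - apply ratio_lt_Q_code_spec in Ht; [|exact Hv].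
    specialize (Hq t). apply Rabs_def2 in Hq. lra.
  - apply ratio_lt_Q_code_spec; [exact Hv|].
    specialize (Hq t). apply Rabs_def2 in Hq. lra.
Qed.

Lemma computable_upper_threshold (f : list bool -> R) x y :
  computable_map enc_sit f -> 0 <= y < x ->
  exists a safe, a < x /\ recursive_selection safe /\
    (forall t, safe t = true -> f t <= a) /\ (forall t, f t < y -> safe t = true).
Proof.
  intros Hf Hxy. destruct (rational_with_margin y x Hxy) as (u & v & M & Hv & Hy & Hx).
  destruct (computable_approx_selection f M (Q_code_lt_ratio u v) Hf) as (q & Hq & Hsel).
  { intros g Hg. unfold Q_code_lt_ratio. recursive_closure. }
  exists (INR u / INR v + (/ 2) ^ M), (fun t => Q_code_lt_ratio u v (enc_Q (q t M))).
  split; [lra | split; [exact Hsel | split]]; intros t Ht.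
  - apply Q_code_lt_ratio_spec in Ht; [|exact Hv].
    specialize (Hq t). apply Rabs_def2 in Hq. lra.
  - apply Q_code_lt_ratio_spec; [exact Hv|].
    specialize (Hq t). apply Rabs_def2 in Hq. lra.
Qed.

Lemma in_I_R_LimInf_le Rn phi omega x :
  computable_map enc_sit (flo phi) -> random Rn phi omega -> in_I_R Rn omega x ->
  Rbar_le (LimInf_seq (fun n => flo phi (prefix omega n))) x.
Proof.
  intros Hlo Hr Hx.
  destruct (Rbar_le_lt_dec (LimInf_seq (fun n => flo phi (prefix omega n))) x) as [|Hlt];
    [assumption | exfalso].
  pose proof (Hx _ (random_unit_interval Rn phi omega Hr)) as Hx01. simpl in Hx01.
  destruct (LimInf_seq_gt x _ Hlt) as (y & Hxy & [N HN]).
  destruct (computable_lower_threshold (flo phi) x y Hlo ltac:(lra))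
    as (a & safe & Hxa & Hrec & Hsafe & Hsafe_path).
  assert (Ha : 0 <= a /\ a <= 1 /\ 1 <= 1).
  { pose proof (fs_ok phi (prefix omega N)).
    pose proof (Hsafe _ (Hsafe_path _ (HN N (Nat.le_refl N)))). lra. }
  assert (Hrand : random Rn (const_fs (mkInterval a 1 Ha)) omega).
  { apply (random_const_of_eventually_safe Rn phi _ safe); auto.
    - intros t Ht. simpl. pose proof (fs_ok phi t). pose proof (Hsafe t Ht). lra.
    - exists N. intros n Hn. apply Hsafe_path, HN, Hn. }
  specialize (Hx _ Hrand). simpl in Hx. lra.
Qed.

Lemma in_I_R_le_LimSup Rn phi omega x :
  computable_map enc_sit (fhi phi) -> random Rn phi omega -> in_I_R Rn omega x ->
  Rbar_le x (LimSup_seq (fun n => fhi phi (prefix omega n))).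
Proof.
  intros Hhi Hr Hx.
  destruct (Rbar_le_lt_dec x (LimSup_seq (fun n => fhi phi (prefix omega n)))) as [|Hlt];
    [assumption | exfalso].
  pose proof (Hx _ (random_unit_interval Rn phi omega Hr)) as Hx01. simpl in Hx01.
  destruct (LimSup_seq_lt x _ Hlt) as (y & Hyx & [N HN]).
  assert (Hy : 0 <= y).
  { pose proof (fs_ok phi (prefix omega N)). specialize (HN N (Nat.le_refl N)). lra. }
  destruct (computable_upper_threshold (fhi phi) x y Hhi ltac:(lra))
    as (a & safe & Hax & Hrec & Hsafe & Hsafe_path).
  assert (Ha : 0 <= 0 /\ 0 <= a /\ a <= 1).
  { pose proof (fs_ok phi (prefix omega N)).
    pose proof (Hsafe _ (Hsafe_path _ (HN N (Nat.le_refl N)))). lra. }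
  assert (Hrand : random Rn (const_fs (mkInterval 0 a Ha)) omega).
  { apply (random_const_of_eventually_safe Rn phi _ safe); auto.
    - intros t Ht. simpl. pose proof (fs_ok phi t). pose proof (Hsafe t Ht). lra.
    - exists N. intros n Hn. apply Hsafe_path, HN, Hn. }
  specialize (Hx _ Hrand). simpl in Hx. lra.
Qed.

Theorem proposition5 (Rn : rnotion) (phi : forecasting_system)
  (omega : nat -> bool) :
  computable_fs phi -> random Rn phi omega ->
  forall x : R, in_I_R Rn omega x -> in_I_phi phi omega x.
Proof.
  intros [Hlo Hhi] Hr x Hx. split.
  - apply (in_I_R_LimInf_le Rn); assumption.
  - apply (in_I_R_le_LimSup Rn); assumption.
Qed.
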